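(* Let $F$ be a distribution on $[0,\infty)$ (the particle lifetime distribution of a sub-critical age-dependent branching process), let $A=h'(1)\in(0,1)$ where $h$ is the particle production generating function, and let $$A(t)=\mathbf E Z(t)=(1-A)\sum_{n=1}^\infty A^{n-1}\big(1-F^{*n}(t)\big),\quad t\ge0,$$ where $Z(t)$ is the number of particles at time $t$. Let $0<T\le\infty$, $\Delta=(0,T]$ (with the convention $A(t+T)=0$ if $T=\infty$), and assume $F\in\mathcal L_\Delta$. Then $F\in\mathcal S_\Delta$ if and only if $A(t)-A(t+T)\sim F(t+\Delta)/(1-A)$ as $t\to\infty$.
   Context: $F^{*n}(t)=F^{*n}(-\infty,t]$ is the $n$-fold convolution distribution function. For $0<T\le\infty$, $t+\Delta=(t,t+T]$. $F\in\mathcal L_\Delta$ means $F(x+\Delta)>0$ for all large $x$ and $F(x+s+\Delta)/F(x+\Delta)\to1$ as $x\to\infty$ uniformly in $s\in[0,1]$. A distribution $F$ on $[0,\infty)$ with unbounded support is in $\mathcal S_\Delta$ if $F\in\mathcal L_\Delta$ and $(F*F)(x+\Delta)\sim2F(x+\Delta)$. $a\sim b$ means $a/b\to1$. *)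

From Stdlib Require Import Reals Lra ZArith ClassicalEpsilon.
Open Scope R_scope.

(* Limit of a real sequence (chosen by epsilon; meaningful when it converges). *)
Definition lim (u : nat -> R) : R :=
  epsilon (inhabits 0) (fun l => Un_cv u l).

(* A distribution on [0,oo), given by its distribution function F(t)=F(-oo,t]. *)
Definition is_distr (F : R -> R) : Prop :=
  (forall x y, x <= y -> F x <= F y) /\
  (forall x, forall eps, eps > 0 -> exists d, d > 0 /\
      forall y, x <= y < x + d -> Rabs (F y - F x) < eps) /\
  (forall x, x < 0 -> F x = 0) /\
  (forall eps, eps > 0 -> exists M, forall x, x >= M -> Rabs (F x - 1) < eps).

Definition unbounded_support (F : R -> R) : Prop := forall x, F x < 1.

(* Mass of the dyadic cell ((k-1)/2^j, k/2^j] (cell [0,0] for k = 0). *)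
Definition dyad_mass (P : R -> R) (j k : nat) : R :=
  match k with
  | O => P 0
  | S k' => P (INR (S k') / 2 ^ j) - P (INR k' / 2 ^ j)
  end.

(* Dyadic approximation of (P*Q)(x) = P(X+Y <= x), X ~ P, Y ~ Q independent:
   sum_k P(ceil(2^j X) = k) Q(x + 2^-j - k 2^-j)
   (terms with k > 2^j x + 1 vanish because Q = 0 on (-oo,0)). *)
Definition conv_approx (P Q : R -> R) (x : R) (j : nat) : R :=
  sum_f_R0 (fun k => dyad_mass P j k * Q (x + (1 - INR k) / 2 ^ j))
           (Z.to_nat (up (x * 2 ^ j)) + 1).

(* Convolution of distribution functions of distributions on [0,oo).
   For such P, Q one has (P*Q)(x) <= conv_approx P Q x j <= (P*Q)(x + 2^-j),
   so the limit is exactly the convolution distribution function. *)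
Definition conv (P Q : R -> R) (x : R) : R := lim (conv_approx P Q x).

(* n-fold convolution power; F^{*0} = distribution function of delta_0 *)
Fixpoint conv_pow (F : R -> R) (n : nat) : R -> R :=
  match n with
  | O => fun x => if Rlt_dec x 0 then 0 else 1
  | S n' => conv F (conv_pow F n')
  end.

(* Delta = (0,T], 0 < T <= oo; None encodes T = oo. *)
Definition Tval_ok (T : option R) : Prop :=
  match T with Some t => 0 < t | None => True end.

(* G(x + Delta) = G((x, x+T]) *)
Definition mass_int (G : R -> R) (T : option R) (x : R) : R :=
  match T with
  | Some t => G (x + t) - G x
  | None => 1 - G x
  end.

Definition equiv_inf (f g : R -> R) : Prop :=
  forall eps, eps > 0 -> exists x0, forall x, x >= x0 ->
    Rabs (f x / g x - 1) < eps.

Definition in_L (F : R -> R) (T : option R) : Prop :=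
  (exists x0, forall x, x >= x0 -> mass_int F T x > 0) /\
  (forall eps, eps > 0 -> exists x0, forall x s, x >= x0 -> 0 <= s <= 1 ->
      Rabs (mass_int F T (x + s) / mass_int F T x - 1) < eps).

Definition in_S (F : R -> R) (T : option R) : Prop :=
  is_distr F /\ unbounded_support F /\ in_L F T /\
  equiv_inf (mass_int (conv F F) T) (fun x => 2 * mass_int F T x).

Definition Afun (F : R -> R) (a : R) (t : R) : R :=
  (1 - a) * lim (fun N => sum_f_R0 (fun n => a ^ n * (1 - conv_pow F (S n) t)) N).

Definition Adiff (F : R -> R) (a : R) (T : option R) (t : R) : R :=
  match T with
  | Some u => Afun F a t - Afun F a (t + u)
  | None => Afun F a t
  end.

From Stdlib Require Import Reals Lra Lia Psatz ZArith ClassicalEpsilon.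
Open Scope R_scope.

(* Dividing by 1-a, A(t) - A(t+T) = (1-a) sum_n a^n F^{*(n+1)}(t+Delta), and
   sum_n a^n (n+1) = 1/(1-a)^2, so the theorem says: the series
   sum_n a^n F^{*(n+1)}(t+Delta) is asymptotic to F(t+Delta)/(1-a)^2 iff
   F in S_Delta.

   - If F in L_Delta, then F^{*(n+1)}(t+Delta) >= (n+1-e) F(t+Delta) eventually,
     for every n (conv_pow_window_lower).
   - If F in S_Delta, also F^{*(n+1)}(t+Delta) <= (n+1+e) F(t+Delta)
     (conv_pow_window_upper) and Kesten's bound
     F^{*(n+1)}(t+Delta) <= V q^n F(t+Delta) with a q < 1/a holds
     (kesten_bound); dominated convergence of the series gives the forward
     direction (series_asymp_fwd).
   - Conversely, the lower bounds on all terms together with the asymptotics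
     of the series leave room only for F^{*2}(t+Delta) <= (2+e) F(t+Delta)
     (series_asymp_bwd), i.e. F in S_Delta. *)

Lemma lim_eq u l : Un_cv u l -> lim u = l.
Proof.
  intro H. unfold lim.
  apply (UL_sequence u); [|exact H].
  apply (epsilon_spec (inhabits 0) (fun l => Un_cv u l)). exists l; exact H.
Qed.

Lemma Un_cv_const c : Un_cv (fun _ => c) c.
Proof. intros e He. exists 0%nat. intros. unfold Rdist. rewrite Rminus_diag, Rabs_R0. auto. Qed.

Lemma cv_lower_bound u l b j0 : Un_cv u l -> (forall j, (j0 <= j)%nat -> b <= u j) -> b <= l.
Proof.
  intros Hu Hb. destruct (Rle_dec b l) as [h|h]; auto.
  destruct (Hu (b - l)) as [N HN]; [lra|].
  specialize (HN (max N j0) (Nat.le_max_l _ _)). specialize (Hb (max N j0) (Nat.le_max_r _ _)).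
  unfold Rdist in HN. apply Rabs_def2 in HN. lra.
Qed.

Lemma cv_upper_bound u l b j0 : Un_cv u l -> (forall j, (j0 <= j)%nat -> u j <= b) -> l <= b.
Proof.
  intros Hu Hb. destruct (Rle_dec l b) as [h|h]; auto.
  destruct (Hu (l - b)) as [N HN]; [lra|].
  specialize (HN (max N j0) (Nat.le_max_l _ _)). specialize (Hb (max N j0) (Nat.le_max_r _ _)).
  unfold Rdist in HN. apply Rabs_def2 in HN. lra.
Qed.

Lemma cv_diff_lower_bound u v lu lv b j0 : Un_cv u lu -> Un_cv v lv ->
  (forall j, (j0 <= j)%nat -> b + v j <= u j) -> b + lv <= lu.
Proof.
  intros Hu Hv H. assert (b <= lu - lv).
  { apply (cv_lower_bound (fun j => u j - v j) _ b j0). apply CV_minus; auto.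
    intros j Hj. specialize (H j Hj). lra. }
  lra.
Qed.

Lemma Rabs_le_inv x b : Rabs x <= b -> - b <= x <= b.
Proof. intro H. split_Rabs; lra. Qed.

Definition right_cont (f : R -> R) (x : R) : Prop := forall eps, eps > 0 -> exists d, d > 0 /\
      forall y, x <= y < x + d -> Rabs (f y - f x) < eps.

Lemma right_cont_plus f g x : right_cont f x -> right_cont g x -> right_cont (fun y => f y + g y) x.
Proof.
  intros Hf Hg eps He. destruct (Hf (eps/2)) as [d1 [Hd1 H1]]; [lra|].
  destruct (Hg (eps/2)) as [d2 [Hd2 H2]]; [lra|].
  exists (Rmin d1 d2). split. apply Rmin_pos; auto.
  intros y Hy. assert (y < x + d1) by (pose proof (Rmin_l d1 d2); lra).
  assert (y < x + d2) by (pose proof (Rmin_r d1 d2); lra).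
  specialize (H1 y ltac:(lra)). specialize (H2 y ltac:(lra)).
  replace (f y + g y - (f x + g x)) with ((f y - f x) + (g y - g x)) by ring.
  eapply Rle_lt_trans. apply Rabs_triang. lra.
Qed.

Lemma right_cont_scal c f x : right_cont f x -> right_cont (fun y => c * f y) x.
Proof.
  intros Hf eps He. destruct (Hf (eps / (Rabs c + 1))) as [d [Hd H]].
  { apply Rdiv_lt_0_compat; auto. pose proof (Rabs_pos c); lra. }
  exists d. split; auto. intros y Hy. specialize (H y Hy).
  replace (c * f y - c * f x) with (c * (f y - f x)) by ring.
  rewrite Rabs_mult. pose proof (Rabs_pos c). pose proof (Rabs_pos (f y - f x)).
  apply (Rmult_lt_compat_l (Rabs c + 1)) in H; [|lra].
  replace ((Rabs c + 1) * (eps / (Rabs c + 1))) with eps in H by (field; lra). nra.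
Qed.

Lemma pow2_pos j : 0 < 2 ^ j.
Proof. apply pow_lt; lra. Qed.

Lemma pow2_ge1 j : 1 <= 2 ^ j.
Proof. apply pow_R1_Rle; lra. Qed.

Lemma inv_pow2_le1 j : / 2 ^ j <= 1.
Proof.
  pose proof (pow2_ge1 j). rewrite <- Rinv_1. apply Rinv_le_contravar; lra.
Qed.

Lemma pow2_INR j : INR j < 2 ^ j.
Proof.
  induction j. simpl; lra.
  rewrite S_INR; simpl. pose proof (pow2_ge1 j). lra.
Qed.

Lemma inv_pow2_small e : 0 < e -> exists j, / 2 ^ j < e.
Proof.
  intro He. destruct (archimed (/ e)) as [H1 _].
  exists (Z.to_nat (up (/ e))).
  assert (/ e < 2 ^ Z.to_nat (up (/ e))).
  { pose proof (pow2_INR (Z.to_nat (up (/ e)))).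
    destruct (Z_lt_le_dec (up (/e)) 0).
    - assert (IZR (up (/e)) < 0) by (apply IZR_lt; lia).
      pose proof (Rinv_0_lt_compat e He). lra.
    - rewrite INR_IZR_INZ, Z2Nat.id in H by lia. lra. }
  pose proof (pow2_pos (Z.to_nat (up (/ e)))).
  pose proof (Rinv_0_lt_compat e He).
  set (N := Z.to_nat (up (/ e))) in *. rewrite <- (Rinv_inv e). apply Rinv_lt_contravar; [apply Rmult_lt_0_compat|]; auto.
Qed.

Lemma inv_pow2_mono j j' : (j <= j')%nat -> / 2 ^ j' <= / 2 ^ j.
Proof.
  intro H. apply Rinv_le_contravar. apply pow2_pos. apply Rle_pow; auto; lra.
Qed.

Lemma INR_to_nat_ge z : IZR z <= INR (Z.to_nat z).
Proof.
  destruct (Z_lt_le_dec z 0).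
  - assert (IZR z < 0) by (apply IZR_lt; lia). pose proof (pos_INR (Z.to_nat z)); lra.
  - rewrite INR_IZR_INZ, Z2Nat.id by lia. lra.
Qed.

Lemma exists_nat_ge r : exists N, r <= INR N.
Proof.
  destruct (archimed r) as [H1 _]. exists (Z.to_nat (up r)).
  pose proof (INR_to_nat_ge (up r)). lra.
Qed.

Lemma dyad_floor y j : 0 <= y -> exists K, INR K / 2 ^ j <= y < INR (S K) / 2 ^ j.
Proof.
  intro Hy. pose proof (pow2_pos j) as Hp.
  destruct (archimed (y * 2 ^ j)) as [H1 H2].
  assert (0 <= y * 2 ^ j) by nra.
  assert (1 <= up (y * 2 ^ j))%Z.
  { assert (0 < up (y * 2 ^ j))%Z by (apply lt_IZR; lra). lia. }
  exists (Z.to_nat (up (y * 2 ^ j) - 1)).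
  rewrite S_INR, INR_IZR_INZ, Z2Nat.id by lia.
  rewrite minus_IZR. simpl.
  split; unfold Rdiv.
  - apply (Rmult_le_reg_r (2 ^ j)); auto.
    rewrite Rmult_assoc, Rinv_l by lra. lra.
  - apply (Rmult_lt_reg_r (2 ^ j)); auto.
    rewrite Rmult_assoc, Rinv_l by lra. lra.
Qed.

Lemma sum_tail_zero f N1 N2 : (forall k, (N1 < k)%nat -> f k = 0) -> (N1 <= N2)%nat ->
  sum_f_R0 f N2 = sum_f_R0 f N1.
Proof.
  intros H Hle. induction Hle. reflexivity.
  simpl. rewrite IHHle, H by lia. ring.
Qed.

Lemma sum_mono_N f K N : (forall k, 0 <= f k) -> (K <= N)%nat ->
  sum_f_R0 f K <= sum_f_R0 f N.
Proof.
  intros H Hle. induction Hle. lra. simpl. specialize (H (S m)). lra.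
Qed.

Lemma sum_split_if (P : nat -> Prop) (dec : forall k, {P k} + {~ P k}) f N :
  sum_f_R0 f N = sum_f_R0 (fun k => if dec k then f k else 0) N +
                 sum_f_R0 (fun k => if dec k then 0 else f k) N.
Proof.
  rewrite <- sum_plus. apply sum_eq. intros i _. destruct (dec i); ring.
Qed.

Lemma sum_scal c f N : sum_f_R0 (fun k => c * f k) N = c * sum_f_R0 f N.
Proof. rewrite scal_sum. apply sum_eq. intros; ring. Qed.

Lemma sum_scal_r c f N : sum_f_R0 (fun k => f k * c) N = sum_f_R0 f N * c.
Proof. rewrite Rmult_comm, scal_sum. reflexivity. Qed.

Lemma sum_shift f n : sum_f_R0 f (S n) = f 0%nat + sum_f_R0 (fun k => f (S k)) n.
Proof.
  induction n. simpl. ring.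
  rewrite tech5, IHn, tech5. ring.
Qed.

Lemma sum_rev f n : sum_f_R0 f n = sum_f_R0 (fun k => f (n - k)%nat) n.
Proof.
  induction n. simpl. reflexivity.
  rewrite tech5, sum_shift, IHn. rewrite Nat.sub_0_r. simpl. ring.
Qed.

(* The anti-diagonal sum sum_{k<=n} a_k b_{n-k}; the triangular sums below are
   exchanged through it, which gives the commutativity of convolution. *)
Definition anti_diag (a b : nat -> R) (n : nat) : R := sum_f_R0 (fun k => a k * b (n - k)%nat) n.

Lemma anti_diag_sym a b n : anti_diag a b n = anti_diag b a n.
Proof.
  unfold anti_diag. rewrite sum_rev. apply sum_eq. intros i Hi.
  replace (n - (n - i))%nat with i by lia. ring.
Qed.

Lemma tri_sum_step a b c :
  sum_f_R0 (fun k => a k * sum_f_R0 b (S c - k)) (S c) =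
  sum_f_R0 (fun k => a k * sum_f_R0 b (c - k)) c + anti_diag a b (S c).
Proof.
  unfold anti_diag. rewrite !tech5. rewrite Nat.sub_diag.
  simpl (sum_f_R0 b 0).
  assert (sum_f_R0 (fun k => a k * sum_f_R0 b (S c - k)) c =
          sum_f_R0 (fun k => a k * sum_f_R0 b (c - k)) c +
          sum_f_R0 (fun k => a k * b (S c - k)%nat) c).
  { rewrite <- sum_plus. apply sum_eq. intros i Hi.
    replace (S c - i)%nat with (S (c - i)) by lia. rewrite tech5. ring. }
  rewrite H. ring.
Qed.

Lemma tri_sum_sym a b c :
  sum_f_R0 (fun k => a k * sum_f_R0 b (c - k)) c =
  sum_f_R0 (fun l => b l * sum_f_R0 a (c - l)) c.
Proof.
  induction c. simpl. ring.
  rewrite !tri_sum_step, IHc, anti_diag_sym. reflexivity.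
Qed.

(* Sub-distribution functions: distribution functions of measures on [0,oo)
   of total mass c.  Convolutions of truncated distributions have mass < 1,
   so the convolution calculus is developed at this generality. *)

Definition subdistr (G : R -> R) (c : R) : Prop :=
  (forall x y, x <= y -> G x <= G y) /\
  (forall x, forall eps, eps > 0 -> exists d, d > 0 /\
      forall y, x <= y < x + d -> Rabs (G y - G x) < eps) /\
  (forall x, x < 0 -> G x = 0) /\
  (forall eps, eps > 0 -> exists M, forall x, x >= M -> Rabs (G x - c) < eps).

Lemma distr_subdistr F : is_distr F -> subdistr F 1.
Proof. intro H; exact H. Qed.

Section SubDistribution.
Variables (G : R -> R) (c : R).
Hypothesis HG : subdistr G c.

Lemma subdistr_mono x y : x <= y -> G x <= G y.
Proof. destruct HG as [H _]; apply H. Qed.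

Lemma subdistr_neg x : x < 0 -> G x = 0.
Proof. destruct HG as [_ [_ [H _]]]; apply H. Qed.

Lemma subdistr_nonneg x : 0 <= G x.
Proof.
  destruct (Rlt_dec x 0) as [h|h].
  - rewrite subdistr_neg; lra.
  - rewrite <- (subdistr_neg (-1)) by lra. apply subdistr_mono; lra.
Qed.

Lemma subdistr_le_mass x : G x <= c.
Proof.
  destruct (Rle_dec (G x) c) as [h|h]; auto.
  destruct HG as [_ [_ [_ H]]].
  destruct (H (G x - c)) as [M HM]; [lra|].
  specialize (HM (Rmax x M) (Rle_ge _ _ (Rmax_r _ _))).
  assert (G x <= G (Rmax x M)) by (apply subdistr_mono; apply Rmax_l).
  apply Rabs_def2 in HM. lra.
Qed.

Lemma subdistr_mass_nonneg : 0 <= c.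
Proof. pose proof (subdistr_nonneg 0); pose proof (subdistr_le_mass 0); lra. Qed.

Lemma subdistr_right_cont x : right_cont G x.
Proof. destruct HG as [_ [H _]]; exact (H x). Qed.

Lemma subdistr_limit eps : eps > 0 -> exists M, forall x, x >= M -> Rabs (G x - c) < eps.
Proof. destruct HG as [_ [_ [_ H]]]; apply H. Qed.

End SubDistribution.

Lemma subdistr_near_mass G c e B : subdistr G c -> 0 < e -> exists M, B <= M /\ 0 <= M /\ c - e <= G (M - 1).
Proof.
  intros HG He. destruct (subdistr_limit G c HG e He) as [M1 H1].
  exists (Rmax (Rmax B 0) (M1 + 1)). split; [|split].
  - pose proof (Rmax_l (Rmax B 0) (M1 + 1)). pose proof (Rmax_l B 0). lra.
  - pose proof (Rmax_l (Rmax B 0) (M1 + 1)). pose proof (Rmax_r B 0). lra.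
  - specialize (H1 (Rmax (Rmax B 0) (M1 + 1) - 1)). apply Rabs_def2 in H1. lra.
    pose proof (Rmax_r (Rmax B 0) (M1 + 1)). lra.
Qed.

Lemma dirac0_subdistr : subdistr (fun x => if Rlt_dec x 0 then 0 else 1) 1.
Proof.
  split; [|split; [|split]].
  - intros x y Hxy. destruct (Rlt_dec x 0); destruct (Rlt_dec y 0); lra.
  - intros x eps He. destruct (Rlt_dec x 0) as [h|h].
    + exists (- x). split; [lra|]. intros y Hy. destruct (Rlt_dec y 0); [|lra].
      rewrite Rminus_diag, Rabs_R0; lra.
    + exists 1. split; [lra|]. intros y Hy. destruct (Rlt_dec y 0); [lra|].
      rewrite Rminus_diag, Rabs_R0; lra.
  - intros x Hx. destruct (Rlt_dec x 0); lra.
  - intros eps He. exists 0. intros x Hx. destruct (Rlt_dec x 0); [lra|].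
    rewrite Rminus_diag, Rabs_R0; lra.
Qed.

(* The restriction of G to [0, M]: a sub-distribution of mass G(M). *)
Definition trunc (G : R -> R) (M : R) : R -> R := fun z => Rmin (G z) (G M).

Lemma Rmin_lip a b c : Rabs (Rmin a c - Rmin b c) <= Rabs (a - b).
Proof.
  unfold Rmin. destruct (Rle_dec a c); destruct (Rle_dec b c);
  split_Rabs; lra.
Qed.

Lemma trunc_subdistr G c M : subdistr G c -> subdistr (trunc G M) (G M).
Proof.
  intro HG. unfold trunc. split; [|split; [|split]].
  - intros x y Hxy. pose proof (subdistr_mono G c HG x y Hxy). unfold Rmin.
    destruct (Rle_dec (G x) (G M)); destruct (Rle_dec (G y) (G M)); lra.
  - intros x eps He. destruct (subdistr_right_cont G c HG x eps He) as [d [Hd H]].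
    exists d; split; auto. intros y Hy. eapply Rle_lt_trans. apply Rmin_lip. auto.
  - intros x Hx. rewrite (subdistr_neg G c HG x Hx). pose proof (subdistr_nonneg G c HG M).
    unfold Rmin. destruct (Rle_dec 0 (G M)); lra.
  - intros eps He. exists M. intros x Hx. pose proof (subdistr_mono G c HG M x ltac:(lra)).
    unfold Rmin. destruct (Rle_dec (G x) (G M)).
    + replace (G x - G M) with 0 by lra. rewrite Rabs_R0; lra.
    + rewrite Rminus_diag, Rabs_R0; lra.
Qed.

Definition approx_sum (P Q : R -> R) (x : R) (j N : nat) : R :=
  sum_f_R0 (fun k => dyad_mass P j k * Q (x + (1 - INR k) / 2 ^ j)) N.

Lemma dyad_mass_S P j k : dyad_mass P j (S k) = P (INR (S k) / 2 ^ j) - P (INR k / 2 ^ j).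
Proof. reflexivity. Qed.

Lemma dyad_mass_0 P j : dyad_mass P j 0 = P 0.
Proof. reflexivity. Qed.

Lemma dyad_mass_sum P j K : sum_f_R0 (dyad_mass P j) K = P (INR K / 2 ^ j).
Proof.
  induction K.
  - simpl. unfold Rdiv. rewrite Rmult_0_l. reflexivity.
  - rewrite tech5, IHK, dyad_mass_S. ring.
Qed.

Lemma dyad_mass_nonneg P c j k : subdistr P c -> 0 <= dyad_mass P j k.
Proof.
  intro HP. destruct k; [rewrite dyad_mass_0|rewrite dyad_mass_S].
  - apply (subdistr_nonneg P c HP).
  - assert (INR k / 2 ^ j <= INR (S k) / 2 ^ j).
    { unfold Rdiv. apply Rmult_le_compat_r. left; apply Rinv_0_lt_compat, pow2_pos.
      apply le_INR; lia. }
    pose proof (subdistr_mono P c HP _ _ H). lra.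
Qed.

Lemma grid_arg_neg x j k : 1 + x * 2 ^ j < INR k -> x + (1 - INR k) / 2 ^ j < 0.
Proof.
  intro H. pose proof (pow2_pos j).
  assert ((1 - INR k) / 2 ^ j < - x).
  { apply (Rmult_lt_reg_r (2 ^ j)); auto. unfold Rdiv.
    rewrite Rmult_assoc, Rinv_l by lra. lra. }
  lra.
Qed.

Lemma approx_sum_eq P Q cQ x j N : subdistr Q cQ -> 1 + x * 2 ^ j <= INR N ->
  conv_approx P Q x j = approx_sum P Q x j N.
Proof.
  intros HQ HN. unfold conv_approx, approx_sum.
  set (f := fun k => dyad_mass P j k * Q (x + (1 - INR k) / 2 ^ j)).
  assert (Hv : forall M k, 1 + x * 2 ^ j <= INR M -> (M < k)%nat -> f k = 0).
  { intros M k HM Hk. unfold f. rewrite (subdistr_neg Q cQ HQ). ring.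
    apply grid_arg_neg. apply lt_INR in Hk. lra. }
  set (N0 := (Z.to_nat (up (x * 2 ^ j)) + 1)%nat).
  assert (H0 : 1 + x * 2 ^ j <= INR N0).
  { unfold N0. rewrite plus_INR. simpl. destruct (archimed (x * 2 ^ j)).
    pose proof (INR_to_nat_ge (up (x * 2 ^ j))). lra. }
  fold N0. destruct (le_ge_dec N N0).
  - apply sum_tail_zero; auto. intros k Hk. apply (Hv N); auto.
  - symmetry. apply sum_tail_zero; auto. intros k Hk. apply (Hv N0); auto.
Qed.

Lemma approx_nonneg P Q cP cQ x j N : subdistr P cP -> subdistr Q cQ -> 0 <= approx_sum P Q x j N.
Proof.
  intros HP HQ. apply cond_pos_sum. intro k.
  apply Rmult_le_pos. apply (dyad_mass_nonneg P cP); auto. apply (subdistr_nonneg Q cQ HQ).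
Qed.

Lemma approx_le P Q cP cQ x j N : subdistr P cP -> subdistr Q cQ ->
  approx_sum P Q x j N <= cQ * P (INR N / 2 ^ j).
Proof.
  intros HP HQ. rewrite <- dyad_mass_sum. rewrite <- sum_scal. unfold approx_sum.
  apply sum_Rle. intros k _. rewrite Rmult_comm. apply Rmult_le_compat_r.
  apply (dyad_mass_nonneg P cP); auto. apply (subdistr_le_mass Q cQ HQ).
Qed.

Lemma approx_mono_x P Q cP cQ x y j N : subdistr P cP -> subdistr Q cQ -> x <= y ->
  approx_sum P Q x j N <= approx_sum P Q y j N.
Proof.
  intros HP HQ Hxy. apply sum_Rle. intros k _. apply Rmult_le_compat_l.
  apply (dyad_mass_nonneg P cP); auto. apply (subdistr_mono Q cQ HQ). lra.
Qed.

Lemma approx_mono P Q cP cQ x y j : subdistr P cP -> subdistr Q cQ -> x <= y ->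
  conv_approx P Q x j <= conv_approx P Q y j.
Proof.
  intros HP HQ Hxy. pose proof (pow2_pos j).
  destruct (exists_nat_ge (1 + Rabs y * 2 ^ j)) as [N HN].
  pose proof (Rle_abs y). pose proof (Rabs_pos y).
  rewrite (approx_sum_eq P Q cQ x j N), (approx_sum_eq P Q cQ y j N); auto; try nra.
  apply approx_mono_x with cP cQ; auto.
Qed.

(* Halving the mesh can only decrease the sum: each cell splits in two, and
   the Q-factor of the upper half is taken at a point further left. *)
Lemma approx_refine P Q cP cQ x j N : subdistr P cP -> subdistr Q cQ ->
  approx_sum P Q x (S j) (2 * N) <= approx_sum P Q x j N.
Proof.
  intros HP HQ. pose proof (pow2_pos j) as Hp.
  assert (E2 : 2 ^ S j = 2 * 2 ^ j) by reflexivity.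
  induction N.
  - unfold approx_sum. simpl sum_f_R0.
    apply Rmult_le_compat_l. apply (subdistr_nonneg P cP HP).
    apply (subdistr_mono Q cQ HQ).
    apply Rplus_le_compat_l. unfold Rdiv. rewrite Rinv_mult.
    assert (0 < / 2 ^ j) by (apply Rinv_0_lt_compat; lra). nra.
  - replace (2 * S N)%nat with (S (S (2 * N))) by lia.
    unfold approx_sum in *. rewrite !tech5.
    match goal with |- ?a + ?b + ?c <= ?d + ?e => assert (b + c <= e) end.
    + rewrite !dyad_mass_S.
      replace (INR (S (S (2 * N))) / 2 ^ S j) with (INR (S N) / 2 ^ j).
      2:{ rewrite E2, !S_INR, mult_INR. simpl INR. field. lra. }
      replace (INR (2 * N) / 2 ^ S j) with (INR N / 2 ^ j).
      2:{ rewrite E2, mult_INR. simpl INR. field. lra. }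
      replace (x + (1 - INR (S (2 * N))) / 2 ^ S j) with (x + (1 - INR (S N)) / 2 ^ j).
      2:{ rewrite E2, !S_INR, mult_INR. simpl INR. field. lra. }
      set (A := P (INR N / 2 ^ j)). set (C := P (INR (S N) / 2 ^ j)).
      set (B := P (INR (S (2 * N)) / 2 ^ S j)).
      set (q1 := Q (x + (1 - INR (S N)) / 2 ^ j)).
      set (q2 := Q (x + (1 - INR (S (S (2 * N)))) / 2 ^ S j)).
      assert (A <= B /\ B <= C).
      { unfold A, B, C. split; apply (subdistr_mono P cP HP); rewrite E2, ?S_INR, ?mult_INR;
        simpl INR; unfold Rdiv; rewrite Rinv_mult;
        assert (0 < / 2 ^ j) by (apply Rinv_0_lt_compat; lra);
        pose proof (pos_INR N); nra. }
      assert (q2 <= q1).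
      { unfold q1, q2. apply (subdistr_mono Q cQ HQ). rewrite E2, !S_INR, mult_INR.
        simpl INR. unfold Rdiv; rewrite Rinv_mult.
        assert (0 < / 2 ^ j) by (apply Rinv_0_lt_compat; lra). nra. }
      assert (0 <= q2) by (apply (subdistr_nonneg Q cQ HQ)).
      nra.
    + lra.
Qed.

Lemma approx_decreasing P Q cP cQ x : subdistr P cP -> subdistr Q cQ ->
  Un_decreasing (conv_approx P Q x).
Proof.
  intros HP HQ j. pose proof (pow2_pos j).
  destruct (exists_nat_ge (1 + Rabs x * 2 ^ j)) as [N HN].
  assert (x <= Rabs x) by apply Rle_abs.
  rewrite (approx_sum_eq P Q cQ x j N); auto; [|nra].
  rewrite (approx_sum_eq P Q cQ x (S j) (2 * N)); auto.
  - apply approx_refine with cP cQ; auto.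
  - rewrite mult_INR. simpl pow. simpl INR. pose proof (Rabs_pos x). nra.
Qed.

Lemma approx_cv_conv P Q cP cQ x : subdistr P cP -> subdistr Q cQ ->
  Un_cv (conv_approx P Q x) (conv P Q x).
Proof.
  intros HP HQ. destruct (decreasing_cv (conv_approx P Q x)) as [l Hl].
  - apply approx_decreasing with cP cQ; auto.
  - exists 0. intros y [j Hj]. subst y.
    unfold opp_seq. destruct (exists_nat_ge (1 + x * 2 ^ j)) as [N HN].
    rewrite (approx_sum_eq P Q cQ x j N); auto.
    pose proof (approx_nonneg P Q cP cQ x j N HP HQ). lra.
  - unfold conv. rewrite (lim_eq _ l Hl). exact Hl.
Qed.

Lemma conv_le_approx P Q cP cQ x j : subdistr P cP -> subdistr Q cQ -> conv P Q x <= conv_approx P Q x j.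
Proof.
  intros. apply decreasing_ineq. apply approx_decreasing with cP cQ; auto.
  apply approx_cv_conv with cP cQ; auto.
Qed.

Lemma approx_right_cont P Q cQ x j N : subdistr Q cQ -> right_cont (fun y => approx_sum P Q y j N) x.
Proof.
  intros HQ. unfold approx_sum. induction N.
  - apply (right_cont_scal _ (fun y => Q (y + (1 - INR 0) / 2 ^ j))). intros eps He.
    destruct (subdistr_right_cont Q cQ HQ (x + (1 - INR 0) / 2 ^ j) eps He) as [d [Hd H]].
    exists d. split; auto. intros y Hy. apply H. lra.
  - apply (right_cont_plus (fun y => sum_f_R0 (fun k => dyad_mass P j k * Q (y + (1 - INR k) / 2 ^ j)) N)); auto.
    apply (right_cont_scal _ (fun y => Q (y + (1 - INR (S N)) / 2 ^ j))). intros eps He.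
    destruct (subdistr_right_cont Q cQ HQ (x + (1 - INR (S N)) / 2 ^ j) eps He) as [d [Hd H]].
    exists d. split; auto. intros y Hy. apply H. lra.
Qed.

Lemma conv_nonneg P Q cP cQ x : subdistr P cP -> subdistr Q cQ -> 0 <= conv P Q x.
Proof.
  intros HP HQ. apply (cv_lower_bound _ _ 0 0 (approx_cv_conv P Q cP cQ x HP HQ)).
  intros j _. destruct (exists_nat_ge (1 + x * 2 ^ j)) as [N HN].
  rewrite (approx_sum_eq P Q cQ x j N); auto. apply approx_nonneg with cP cQ; auto.
Qed.

Lemma conv_mono P Q cP cQ x y : subdistr P cP -> subdistr Q cQ -> x <= y -> conv P Q x <= conv P Q y.
Proof.
  intros HP HQ Hxy. eapply Rle_cv_lim; [| apply (approx_cv_conv P Q cP cQ x HP HQ)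
   | apply (approx_cv_conv P Q cP cQ y HP HQ)].
  intro j. apply approx_mono with cP cQ; auto.
Qed.

(* Right-continuity: conv P Q x is an infimum of right-continuous
   nondecreasing functions. *)
Lemma conv_right_cont P Q cP cQ x : subdistr P cP -> subdistr Q cQ -> right_cont (conv P Q) x.
Proof.
  intros HP HQ eps He.
  destruct (approx_cv_conv P Q cP cQ x HP HQ (eps/2)) as [j Hj]; [lra|].
  specialize (Hj j (le_n j)). unfold Rdist in Hj.
  pose proof (conv_le_approx P Q cP cQ x j HP HQ) as Hx1.
  pose proof (pow2_pos j).
  destruct (exists_nat_ge (1 + (Rabs x + 1) * 2 ^ j)) as [N HN].
  pose proof (Rle_abs x). pose proof (Rabs_pos x).
  destruct (approx_right_cont P Q cQ x j N HQ (eps/2)) as [d [Hd Hr]]; [lra|].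
  exists (Rmin d 1). split. apply Rmin_pos; lra.
  intros y Hy. pose proof (Rmin_l d 1). pose proof (Rmin_r d 1).
  specialize (Hr y ltac:(lra)).
  pose proof (conv_le_approx P Q cP cQ y j HP HQ) as Hy1.
  pose proof (conv_mono P Q cP cQ x y HP HQ ltac:(lra)) as Hm.
  rewrite (approx_sum_eq P Q cQ y j N) in Hy1 by (auto; nra).
  rewrite (approx_sum_eq P Q cQ x j N) in Hj, Hx1 by (auto; nra).
  apply Rabs_def2 in Hr. apply Rabs_def2 in Hj.
  rewrite Rabs_right; lra.
Qed.

Lemma conv_neg P Q cP cQ x : subdistr P cP -> subdistr Q cQ -> x < 0 -> conv P Q x = 0.
Proof.
  intros HP HQ Hx. apply Rle_antisym; [|apply conv_nonneg with cP cQ; auto].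
  destruct (inv_pow2_small (- x)) as [j Hj]; [lra|].
  eapply Rle_trans. apply (conv_le_approx P Q cP cQ x j); auto.
  destruct (exists_nat_ge (1 + x * 2 ^ j)) as [N HN].
  rewrite (approx_sum_eq P Q cQ x j N); auto.
  unfold approx_sum. right. clear HN. induction N.
  - simpl. rewrite (subdistr_neg Q cQ HQ). ring. unfold Rdiv. lra.
  - rewrite tech5. rewrite IHN. rewrite (subdistr_neg Q cQ HQ). ring.
    rewrite S_INR. pose proof (pos_INR N). pose proof (pow2_pos j).
    assert ((1 - (INR N + 1)) / 2 ^ j <= 0).
    { unfold Rdiv. assert (0 < / 2 ^ j) by (apply Rinv_0_lt_compat; lra). nra. }
    lra.
Qed.

Lemma conv_le P Q cP cQ x : subdistr P cP -> subdistr Q cQ -> conv P Q x <= cP * cQ.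
Proof.
  intros HP HQ. apply (cv_upper_bound (conv_approx P Q x) _ _ 0%nat (approx_cv_conv P Q cP cQ x HP HQ)).
  intros j _. destruct (exists_nat_ge (1 + x * 2 ^ j)) as [N HN].
  rewrite (approx_sum_eq P Q cQ x j N); auto.
  eapply Rle_trans. apply (approx_le P Q cP cQ); auto.
  pose proof (subdistr_le_mass P cP HP (INR N / 2 ^ j)). pose proof (subdistr_mass_nonneg Q cQ HQ).
  rewrite Rmult_comm. apply Rmult_le_compat_r; auto.
Qed.

(* (P*Q)(x) >= P(x/2 - 1) Q(x/2): this forces the total mass cP cQ at infinity. *)
Lemma conv_lower P Q cP cQ x : subdistr P cP -> subdistr Q cQ -> 0 <= x ->
  P (x / 2 - 1) * Q (x / 2) <= conv P Q x.
Proof.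
  intros HP HQ Hx. apply (cv_lower_bound (conv_approx P Q x) _ _ 0%nat (approx_cv_conv P Q cP cQ x HP HQ)).
  intros j _. pose proof (pow2_pos j) as Hp.
  pose proof (inv_pow2_le1 j) as Hh.
  destruct (dyad_floor (x / 2) j) as [K [HK1 HK2]]; [lra|].
  destruct (exists_nat_ge (1 + x * 2 ^ j + INR K)) as [N HN].
  rewrite (approx_sum_eq P Q cQ x j N); auto; [|pose proof (pos_INR K); lra].
  assert (HKN : (K <= N)%nat) by (apply INR_le; pose proof (pos_INR K); nra).
  unfold approx_sum. eapply Rle_trans; [|apply sum_mono_N; [|exact HKN]].
  2:{ intro k. apply Rmult_le_pos. apply dyad_mass_nonneg with cP; auto. apply (subdistr_nonneg Q cQ HQ). }
  eapply Rle_trans with (sum_f_R0 (fun k => dyad_mass P j k * Q (x / 2)) K).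
  - rewrite sum_scal_r. rewrite dyad_mass_sum. apply Rmult_le_compat_r. apply (subdistr_nonneg Q cQ HQ).
    apply (subdistr_mono P cP HP). rewrite S_INR in HK2. unfold Rdiv in *. nra.
  - apply sum_Rle. intros k Hk. apply Rmult_le_compat_l. apply dyad_mass_nonneg with cP; auto.
    apply (subdistr_mono Q cQ HQ). apply le_INR in Hk.
    assert (0 < / 2 ^ j) by (apply Rinv_0_lt_compat; lra). unfold Rdiv in *. nra.
Qed.

Lemma conv_subdistr P Q cP cQ : subdistr P cP -> subdistr Q cQ -> subdistr (conv P Q) (cP * cQ).
Proof.
  intros HP HQ. split; [|split; [|split]].
  - intros; apply conv_mono with cP cQ; auto.
  - intros x eps He. apply (conv_right_cont P Q cP cQ x HP HQ eps He).
  - intros; apply conv_neg with cP cQ; auto.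
  - intros eps He. pose proof (subdistr_mass_nonneg P cP HP). pose proof (subdistr_mass_nonneg Q cQ HQ).
    set (d := eps / (cP + cQ + 1)).
    assert (Hd : 0 < d) by (apply Rdiv_lt_0_compat; lra).
    assert (Hdd : d * (cP + cQ) < eps).
    { unfold d. replace (eps / (cP + cQ + 1) * (cP + cQ)) with (eps * ((cP + cQ) / (cP + cQ + 1))) by (field; lra).
      assert ((cP + cQ) / (cP + cQ + 1) < 1).
      { apply (Rmult_lt_reg_r (cP + cQ + 1)); [lra|]. unfold Rdiv. rewrite Rmult_assoc, Rinv_l by lra. lra. }
      nra. }
    destruct (subdistr_limit P cP HP d Hd) as [M1 H1].
    destruct (subdistr_limit Q cQ HQ d Hd) as [M2 H2].
    exists (2 * (Rabs M1 + Rabs M2 + 1)). intros x Hx.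
    pose proof (Rle_abs M1). pose proof (Rle_abs M2). pose proof (Rabs_pos M1). pose proof (Rabs_pos M2).
    specialize (H1 (x / 2 - 1) ltac:(lra)). specialize (H2 (x / 2) ltac:(lra)).
    apply Rabs_def2 in H1. apply Rabs_def2 in H2.
    pose proof (conv_lower P Q cP cQ x HP HQ ltac:(lra)).
    pose proof (conv_le P Q cP cQ x HP HQ).
    pose proof (subdistr_nonneg Q cQ HQ (x/2)). pose proof (subdistr_le_mass Q cQ HQ (x/2)).
    apply Rabs_def1; [lra|]. nra.
Qed.

(* Comparing the approximations of P*Q at x and Q*P at x + 1/2^j with the
   same symmetric double sum over the dyadic grid. *)
Lemma approx_grid_upper P Q cP cQ x j K N : subdistr P cP -> subdistr Q cQ ->
  x < INR (S K) / 2 ^ j ->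
  approx_sum P Q x j N <=
  sum_f_R0 (fun k => dyad_mass P j k * sum_f_R0 (dyad_mass Q j) (S (S K) - k)) (S (S K)).
Proof.
  intros HP HQ HK2. pose proof (pow2_pos j) as Hp.
  assert (Hh : 0 < / 2 ^ j) by (apply Rinv_0_lt_compat; lra).
  rewrite S_INR in HK2. unfold Rdiv in *.
  assert (Hnn : forall k, 0 <= dyad_mass P j k * Q (x + (1 - INR k) * / 2 ^ j)).
  { intro k. apply Rmult_le_pos. apply dyad_mass_nonneg with cP; auto. apply (subdistr_nonneg Q cQ HQ). }
  apply Rle_trans with (approx_sum P Q x j (S (S K))).
  - unfold approx_sum. destruct (le_ge_dec N (S (S K))).
    + apply sum_mono_N; auto.
    + right. apply sum_tail_zero; auto. intros k Hk.
      rewrite (subdistr_neg Q cQ HQ). ring. apply lt_INR in Hk. rewrite !S_INR in Hk. nra.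
  - unfold approx_sum. apply sum_Rle. intros k Hk. apply Rmult_le_compat_l.
    apply dyad_mass_nonneg with cP; auto.
    rewrite dyad_mass_sum. apply (subdistr_mono Q cQ HQ). rewrite minus_INR by auto.
    rewrite !S_INR. unfold Rdiv. nra.
Qed.

Lemma approx_grid_lower P Q cP cQ x j K N : subdistr P cP -> subdistr Q cQ ->
  INR K / 2 ^ j <= x < INR (S K) / 2 ^ j -> (S (S K) <= N)%nat ->
  sum_f_R0 (fun k => dyad_mass Q j k * sum_f_R0 (dyad_mass P j) (S (S K) - k)) (S (S K))
  <= approx_sum Q P (x + / 2 ^ j) j N.
Proof.
  intros HP HQ [HK1 HK2] HN. pose proof (pow2_pos j) as Hp.
  assert (Hh : 0 < / 2 ^ j) by (apply Rinv_0_lt_compat; lra).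
  rewrite S_INR in HK2. unfold Rdiv in *.
  apply Rle_trans with (approx_sum Q P (x + / 2 ^ j) j (S (S K))).
  - unfold approx_sum. apply sum_Rle. intros k Hk. apply Rmult_le_compat_l.
    apply dyad_mass_nonneg with cQ; auto.
    rewrite dyad_mass_sum. apply (subdistr_mono P cP HP). rewrite minus_INR by auto.
    rewrite !S_INR. unfold Rdiv. nra.
  - unfold approx_sum. apply sum_mono_N; auto. intro k.
    apply Rmult_le_pos. apply dyad_mass_nonneg with cQ; auto. apply (subdistr_nonneg P cP HP).
Qed.

(* (P*Q)(x) <= (Q*P)(x + d) for all d > 0, hence by right-continuity
   (P*Q)(x) <= (Q*P)(x). *)
Lemma conv_comm_le P Q cP cQ x : subdistr P cP -> subdistr Q cQ -> conv P Q x <= conv Q P x.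
Proof.
  intros HP HQ. destruct (Rlt_dec x 0) as [Hx|Hx].
  { rewrite (conv_neg P Q cP cQ x HP HQ Hx). apply conv_nonneg with cQ cP; auto. }
  apply Rnot_lt_le in Hx.
  assert (Hd : forall d, d > 0 -> conv P Q x <= conv Q P (x + d)).
  { intros d Hd. destruct (inv_pow2_small d Hd) as [j0 Hj0].
    apply (cv_lower_bound (conv_approx Q P (x + d)) _ _ j0 (approx_cv_conv Q P cQ cP (x + d) HQ HP)).
    intros j Hj. pose proof (inv_pow2_mono _ _ Hj). pose proof (pow2_pos j).
    destruct (dyad_floor x j) as [K HK]; [lra|].
    destruct (exists_nat_ge (1 + (x + 1) * 2 ^ j + INR (S (S K)))) as [N HN].
    pose proof (pos_INR (S (S K))). pose proof (inv_pow2_le1 j).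
    eapply Rle_trans. apply (conv_le_approx P Q cP cQ x j HP HQ).
    rewrite (approx_sum_eq P Q cQ x j N) by (auto; nra).
    eapply Rle_trans. apply (approx_grid_upper P Q cP cQ x j K N HP HQ (proj2 HK)).
    rewrite tri_sum_sym.
    eapply Rle_trans. apply (approx_grid_lower P Q cP cQ x j K N HP HQ HK).
    { apply INR_le. nra. }
    rewrite <- (approx_sum_eq Q P cP (x + / 2 ^ j) j N) by (auto; nra).
    apply approx_mono with cQ cP; auto. lra. }
  apply Rnot_lt_le. intro Hlt.
  destruct (conv_right_cont Q P cQ cP x HQ HP (conv P Q x - conv Q P x)) as [d [Hd' Hr]]; [lra|].
  specialize (Hr (x + d / 2) ltac:(lra)). specialize (Hd (d / 2) ltac:(lra)).
  apply Rabs_def2 in Hr. lra.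
Qed.

Lemma conv_comm P Q cP cQ x : subdistr P cP -> subdistr Q cQ -> conv P Q x = conv Q P x.
Proof.
  intros. apply Rle_antisym; [apply (conv_comm_le P Q cP cQ) | apply (conv_comm_le Q P cQ cP)]; auto.
Qed.

Lemma conv_ext P G1 G2 cP cG x : subdistr P cP -> subdistr G1 cG -> subdistr G2 cG ->
  (forall y, G1 y = G2 y) ->
  conv P G1 x = conv P G2 x.
Proof.
  intros HP H1 H2 He. apply (UL_sequence (conv_approx P G2 x)).
  - apply (Un_cv_ext (conv_approx P G1 x)).
    + intro j. symmetry. unfold conv_approx. apply sum_eq. intros; rewrite He; auto.
    + apply approx_cv_conv with cP cG; auto.
  - apply approx_cv_conv with cP cG; auto.
Qed.

Lemma conv_pow_subdistr F n : subdistr F 1 -> subdistr (conv_pow F n) 1.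
Proof.
  intro HF. induction n.
  - exact dirac0_subdistr.
  - simpl. pose proof (conv_subdistr F (conv_pow F n) 1 1 HF IHn) as H. rewrite Rmult_1_l in H. exact H.
Qed.

Lemma conv_pow_1 F x : subdistr F 1 -> conv_pow F 1 x = F x.
Proof.
  intro HF. simpl. rewrite (conv_comm F _ 1 1) by (auto; exact dirac0_subdistr).
  apply (UL_sequence (conv_approx (fun x => if Rlt_dec x 0 then 0 else 1) F x)).
  - apply approx_cv_conv with 1 1; auto. exact dirac0_subdistr.
  - apply (Un_cv_ext (fun j => F (x + / 2 ^ j))).
    + intro j. symmetry. unfold conv_approx.
      rewrite (sum_tail_zero _ 0%nat).
      * simpl sum_f_R0. destruct (Rlt_dec 0 0); [lra|]. unfold Rdiv. ring_simplify. f_equal. ring.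
      * intros k Hk. destruct k; [lia|]. rewrite dyad_mass_S.
        pose proof (pow2_pos j). pose proof (pos_INR k).
        assert (0 < INR (S k) / 2 ^ j) by (apply Rdiv_lt_0_compat; auto; rewrite S_INR; lra).
        assert (0 <= INR k / 2 ^ j) by (apply Rmult_le_pos; auto; left; apply Rinv_0_lt_compat; auto).
        destruct (Rlt_dec (INR (S k) / 2 ^ j) 0); [lra|]. destruct (Rlt_dec (INR k / 2 ^ j) 0); [lra|]. ring.
      * lia.
    + intros eps He. destruct (subdistr_right_cont F 1 HF x eps He) as [d [Hd H]].
      destruct (inv_pow2_small d Hd) as [j0 Hj0]. exists j0. intros j Hj.
      pose proof (inv_pow2_mono _ _ Hj). pose proof (pow2_pos j).
      assert (0 < / 2 ^ j) by (apply Rinv_0_lt_compat; lra).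
      apply H. lra.
Qed.

Definition window (c : R) (T : option R) (G : R -> R) (x : R) : R :=
  match T with Some t => G (x + t) - G x | None => c - G x end.

Lemma mass_int_window G T x : mass_int G T x = window 1 T G x.
Proof. destruct T; reflexivity. Qed.

(* The length T of the window, with 0 standing for T = oo. *)
Definition window_len (T : option R) : R := match T with Some t => t | None => 0 end.

Lemma window_len_nonneg T : Tval_ok T -> 0 <= window_len T.
Proof. destruct T; simpl; lra. Qed.

Lemma window_nonneg G c T x : subdistr G c -> Tval_ok T -> 0 <= window c T G x.
Proof.
  intros HG HT. destruct T; simpl in *.
  - pose proof (subdistr_mono G c HG x (x + r) ltac:(lra)). lra.
  - pose proof (subdistr_le_mass G c HG x). lra.
Qed.

Lemma window_le_mass G c T x : subdistr G c -> window c T G x <= c.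
Proof.
  intros HG. destruct T; simpl in *.
  - pose proof (subdistr_le_mass G c HG (x + r)). pose proof (subdistr_nonneg G c HG x). lra.
  - pose proof (subdistr_nonneg G c HG x). lra.
Qed.

Lemma window_trunc_le G c M T z : subdistr G c -> Tval_ok T -> G M <= c ->
  window (G M) T (trunc G M) z <= window c T G z.
Proof.
  intros HG HT Hc. unfold window, trunc. destruct T; simpl in *.
  - pose proof (subdistr_mono G c HG z (z + r) ltac:(lra)). unfold Rmin.
    destruct (Rle_dec (G (z + r)) (G M)); destruct (Rle_dec (G z) (G M)); lra.
  - pose proof (subdistr_le_mass G c HG z). unfold Rmin. destruct (Rle_dec (G z) (G M)); lra.
Qed.

Lemma window_trunc_zero G c M T z : subdistr G c -> Tval_ok T -> M <= z -> window (G M) T (trunc G M) z = 0.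
Proof.
  intros HG HT Hz. unfold window, trunc. destruct T; simpl in *.
  - pose proof (subdistr_mono G c HG M z Hz). pose proof (subdistr_mono G c HG M (z + r) ltac:(lra)).
    unfold Rmin. destruct (Rle_dec (G (z + r)) (G M)); destruct (Rle_dec (G z) (G M)); lra.
  - pose proof (subdistr_mono G c HG M z Hz). unfold Rmin. destruct (Rle_dec (G z) (G M)); lra.
Qed.

Lemma window_trunc_eq G c M t z : subdistr G c -> 0 < t -> z + t <= M ->
  window (G M) (Some t) (trunc G M) z = window c (Some t) G z.
Proof.
  intros HG Ht Hz. unfold window, trunc.
  pose proof (subdistr_mono G c HG (z + t) M Hz). pose proof (subdistr_mono G c HG z M ltac:(lra)).
  unfold Rmin. destruct (Rle_dec (G (z + t)) (G M)); destruct (Rle_dec (G z) (G M)); lra.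
Qed.

Lemma window_conv_comm P Q cP cQ c T x : subdistr P cP -> subdistr Q cQ ->
  window c T (conv P Q) x = window c T (conv Q P) x.
Proof.
  intros HP HQ. unfold window. destruct T;
  rewrite !(conv_comm P Q cP cQ) by auto; reflexivity.
Qed.

Lemma window_conv_pow_1 F T x : subdistr F 1 -> window 1 T (conv_pow F 1) x = window 1 T F x.
Proof. intro HF. unfold window. destruct T; rewrite !conv_pow_1; auto. Qed.

Lemma window_conv_pow_2 F T x : subdistr F 1 ->
  window 1 T (conv F F) x = window 1 T (conv_pow F 2) x.
Proof.
  intro HF. unfold window. simpl conv_pow.
  destruct T; rewrite !(conv_ext F F (conv F (fun x => if Rlt_dec x 0 then 0 else 1)) 1 1);
    auto; try apply (conv_pow_subdistr F 1 HF);
    intro y; symmetry; apply (conv_pow_1 F y HF).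
Qed.

(* For T = oo the P-mass beyond the N-th dyadic cell, weighted by cQ. *)
Definition approx_tail (T : option R) (P : R -> R) (cP cQ : R) (j N : nat) : R :=
  match T with Some _ => 0 | None => cQ * (cP - P (INR N / 2 ^ j)) end.

Definition window_approx (P Q : R -> R) (cP cQ : R) (T : option R) (x : R) (j N : nat) : R :=
  sum_f_R0 (fun k => dyad_mass P j k * window cQ T Q (x + (1 - INR k) / 2 ^ j)) N
  + approx_tail T P cP cQ j N.

Definition window_right (T : option R) (x : R) : R := match T with Some t => x + t | None => x end.

Definition grid_bound (r : R) (j : nat) : nat := S (Z.to_nat (up (r * 2 ^ j))).

Lemma grid_bound_ok x r j : x <= r -> 1 + x * 2 ^ j <= INR (grid_bound r j).
Proof.
  intro H. unfold grid_bound. rewrite S_INR. pose proof (INR_to_nat_ge (up (r * 2 ^ j))).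
  destruct (archimed (r * 2 ^ j)). pose proof (pow2_pos j). nra.
Qed.

Lemma grid_point_ge x j N : 1 + x * 2 ^ j <= INR N -> x + / 2 ^ j <= INR N / 2 ^ j.
Proof.
  intro H. pose proof (pow2_pos j). unfold Rdiv.
  apply (Rmult_le_reg_r (2 ^ j)); auto. rewrite Rmult_assoc, Rinv_l, Rmult_plus_distr_r, Rinv_l by lra.
  lra.
Qed.

Lemma window_approx_cv P Q cP cQ T x : subdistr P cP -> subdistr Q cQ -> Tval_ok T ->
  Un_cv (fun j => window_approx P Q cP cQ T x j (grid_bound (window_right T x) j))
        (window (cP * cQ) T (conv P Q) x).
Proof.
  intros HP HQ HT. destruct T as [t|]; simpl in HT |- *.
  - apply (Un_cv_ext (fun j => conv_approx P Q (x + t) j - conv_approx P Q x j)).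
    + intro j. symmetry. unfold window_approx, approx_tail, window.
      rewrite (approx_sum_eq P Q cQ (x + t) j (grid_bound (x + t) j)) by (auto; apply grid_bound_ok; lra).
      rewrite (approx_sum_eq P Q cQ x j (grid_bound (x + t) j)) by (auto; apply grid_bound_ok; lra).
      unfold approx_sum. rewrite Rplus_0_r, <- minus_sum. apply sum_eq. intros i _.
      replace (x + (1 - INR i) / 2 ^ j + t) with (x + t + (1 - INR i) / 2 ^ j) by ring. ring.
    + apply CV_minus; apply approx_cv_conv with cP cQ; auto.
  - apply (Un_cv_ext (fun j => cP * cQ - conv_approx P Q x j)).
    + intro j. symmetry. unfold window_approx, approx_tail, window.
      rewrite (approx_sum_eq P Q cQ x j (grid_bound x j)) by (auto; apply grid_bound_ok; lra).
      unfold approx_sum.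
      assert (sum_f_R0 (fun k => dyad_mass P j k * (cQ - Q (x + (1 - INR k) / 2 ^ j))) (grid_bound x j)
        = cQ * sum_f_R0 (dyad_mass P j) (grid_bound x j) -
          sum_f_R0 (fun k => dyad_mass P j k * Q (x + (1 - INR k) / 2 ^ j)) (grid_bound x j)).
      { rewrite <- sum_scal, <- minus_sum. apply sum_eq. intros; ring. }
      rewrite H, dyad_mass_sum. ring.
    + apply CV_minus. apply Un_cv_const. apply approx_cv_conv with cP cQ; auto.
Qed.

Lemma grid_bound_window T x j : Tval_ok T ->
  x <= INR (grid_bound (window_right T x) j) / 2 ^ j.
Proof.
  intro HT. pose proof (grid_point_ge x j (grid_bound (window_right T x) j)) as H.
  pose proof (inv_pow2_le1 j).
  assert (0 < / 2 ^ j) by (apply Rinv_0_lt_compat, pow2_pos).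
  assert (Hx : x <= window_right T x) by (destruct T; simpl in *; lra).
  specialize (H (grid_bound_ok x _ j Hx)). lra.
Qed.

Lemma dyad_mass_trunc_zero G c M j l : subdistr G c -> M <= INR l / 2 ^ j - / 2 ^ j ->
  dyad_mass (trunc G M) j l = 0.
Proof.
  intros HG H. destruct l.
  - simpl in H. unfold Rdiv in H. rewrite Rmult_0_l in H.
    pose proof (pow2_pos j). assert (0 < / 2 ^ j) by (apply Rinv_0_lt_compat; lra).
    rewrite dyad_mass_0. unfold trunc. rewrite (subdistr_neg G c HG M) by lra.
    pose proof (subdistr_nonneg G c HG 0). unfold Rmin. destruct (Rle_dec (G 0) 0); lra.
  - rewrite dyad_mass_S. unfold trunc. rewrite S_INR in H.
    assert (M <= INR l / 2 ^ j) by (unfold Rdiv in *; lra).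
    pose proof (subdistr_mono G c HG M (INR l / 2 ^ j) H0).
    pose proof (pow2_pos j). assert (0 < / 2 ^ j) by (apply Rinv_0_lt_compat; lra).
    pose proof (subdistr_mono G c HG M (INR (S l) / 2 ^ j) ltac:(rewrite S_INR; unfold Rdiv in *; lra)).
    unfold Rmin. destruct (Rle_dec (G (INR (S l) / 2 ^ j)) (G M)); destruct (Rle_dec (G (INR l / 2 ^ j)) (G M)); lra.
Qed.

Lemma approx_tail_nonneg T P cP cQ j N : subdistr P cP -> 0 <= cQ -> 0 <= approx_tail T P cP cQ j N.
Proof.
  intros HP Hc. destruct T; simpl. lra. pose proof (subdistr_le_mass P cP HP (INR N / 2 ^ j)). nra.
Qed.

Lemma dyad_mass_below P cP j N M : subdistr P cP -> 0 <= M -> M <= INR N / 2 ^ j ->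
  P (M - 1) <= sum_f_R0 (fun k => if Rle_dec (INR k / 2 ^ j) M then dyad_mass P j k else 0) N.
Proof.
  intros HP HM HN. pose proof (pow2_pos j) as Hp. pose proof (inv_pow2_le1 j).
  destruct (dyad_floor M j HM) as [K [HK1 HK2]].
  assert (HKN : (K <= N)%nat).
  { apply INR_le. apply (Rmult_le_reg_r (/ 2 ^ j)). apply Rinv_0_lt_compat; lra.
    unfold Rdiv in *. lra. }
  eapply Rle_trans; [|apply sum_mono_N; [|exact HKN]].
  2:{ intro k. destruct (Rle_dec _ _). apply dyad_mass_nonneg with cP; auto. lra. }
  rewrite (sum_eq _ (dyad_mass P j)).
  - rewrite dyad_mass_sum. apply (subdistr_mono P cP HP). rewrite S_INR in HK2. unfold Rdiv in *. lra.
  - intros i Hi. destruct (Rle_dec _ _) as [h|h]; auto. exfalso. apply h.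
    apply le_INR in Hi. assert (0 < / 2 ^ j) by (apply Rinv_0_lt_compat; lra).
    unfold Rdiv in *. nra.
Qed.

Lemma grid_arg_eq x j k : x + (1 - INR k) / 2 ^ j = x - (INR k / 2 ^ j - / 2 ^ j).
Proof. unfold Rdiv. ring. Qed.

Lemma window_approx_lower_sum P Q cP cQ T (wF : R -> R) a e M x z0 j N :
  subdistr P cP -> 0 <= a -> e <= 1 -> 0 <= M -> 0 <= wF x ->
  M <= INR N / 2 ^ j ->
  (forall z, z0 <= z -> a * wF z <= window cQ T Q z) ->
  (forall y, -1 <= y <= M -> (1 - e) * wF x <= wF (x - y)) ->
  z0 <= x - M ->
  a * (1 - e) * wF x * P (M - 1) <=
  sum_f_R0 (fun k => if Rle_dec (INR k / 2 ^ j) M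
     then dyad_mass P j k * window cQ T Q (x + (1 - INR k) / 2 ^ j) else 0) N.
Proof.
  intros HP Ha He HM Hw HN Hq Hsh Hx.
  pose proof (pow2_pos j) as Hp. pose proof (inv_pow2_le1 j) as Hh1.
  assert (Hh : 0 < / 2 ^ j) by (apply Rinv_0_lt_compat; lra).
  assert (Hc : 0 <= a * (1 - e) * wF x) by (apply Rmult_le_pos; [apply Rmult_le_pos|]; lra).
  eapply Rle_trans.
  apply Rmult_le_compat_l. exact Hc. apply (dyad_mass_below P cP j N M HP HM HN).
  rewrite <- sum_scal. apply sum_Rle. intros k _. destruct (Rle_dec _ _) as [h|h]; [|lra].
  rewrite Rmult_comm. apply Rmult_le_compat_l. apply dyad_mass_nonneg with cP; auto.
  rewrite grid_arg_eq. pose proof (pos_INR k).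
  assert (0 <= INR k / 2 ^ j) by (unfold Rdiv; nra).
  eapply Rle_trans; [|apply Hq; lra].
  rewrite Rmult_assoc. apply Rmult_le_compat_l; auto. apply Hsh. lra.
Qed.

Lemma window_approx_ge_restr P Q cP cQ T x j N M : subdistr P cP -> subdistr Q cQ -> Tval_ok T ->
  sum_f_R0 (fun k => if Rle_dec (INR k / 2 ^ j) M
     then dyad_mass P j k * window cQ T Q (x + (1 - INR k) / 2 ^ j) else 0) N
  <= window_approx P Q cP cQ T x j N.
Proof.
  intros HP HQ HT. unfold window_approx. pose proof (approx_tail_nonneg T P cP cQ j N HP (subdistr_mass_nonneg Q cQ HQ)).
  assert (sum_f_R0 (fun k => if Rle_dec (INR k / 2 ^ j) M
     then dyad_mass P j k * window cQ T Q (x + (1 - INR k) / 2 ^ j) else 0) N <=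
     sum_f_R0 (fun k => dyad_mass P j k * window cQ T Q (x + (1 - INR k) / 2 ^ j)) N).
  { apply sum_Rle. intros k _. destruct (Rle_dec _ _); [lra|].
    apply Rmult_le_pos. apply dyad_mass_nonneg with cP; auto. apply (window_nonneg Q cQ); auto. }
  lra.
Qed.

Lemma window_approx_split_lo F G T x j N M M' : subdistr F 1 -> subdistr G 1 -> Tval_ok T -> M' <= x - M ->
  sum_f_R0 (fun k => if Rle_dec (INR k / 2 ^ j) M
     then dyad_mass F j k * window 1 T G (x + (1 - INR k) / 2 ^ j) else 0) N
  + window_approx F (trunc G M') 1 (G M') T x j N <= window_approx F G 1 1 T x j N.
Proof.
  intros HF HG HT Hx. pose proof (pow2_pos j) as Hp.
  assert (Hh : 0 < / 2 ^ j) by (apply Rinv_0_lt_compat; lra).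
  pose proof (trunc_subdistr G 1 M' HG) as HG'.
  unfold window_approx.
  rewrite (sum_split_if (fun k => INR k / 2 ^ j <= M) (fun k => Rle_dec (INR k / 2 ^ j) M)
     (fun k => dyad_mass F j k * window 1 T G (x + (1 - INR k) / 2 ^ j)) N).
  assert (sum_f_R0 (fun k => dyad_mass F j k * window (G M') T (trunc G M') (x + (1 - INR k) / 2 ^ j)) N
    <= sum_f_R0 (fun k => if Rle_dec (INR k / 2 ^ j) M then 0 else
          dyad_mass F j k * window 1 T G (x + (1 - INR k) / 2 ^ j)) N).
  { apply sum_Rle. intros k _. destruct (Rle_dec _ _) as [h|h].
    - rewrite (window_trunc_zero G 1 M' T); auto. lra. rewrite grid_arg_eq. pose proof (inv_pow2_le1 j). lra.
    - apply Rmult_le_compat_l. apply dyad_mass_nonneg with 1; auto.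
      apply window_trunc_le; auto. apply (subdistr_le_mass G 1 HG). }
  assert (approx_tail T F 1 (G M') j N <= approx_tail T F 1 1 j N).
  { destruct T; simpl. lra. pose proof (subdistr_le_mass G 1 HG M'). pose proof (subdistr_le_mass F 1 HF (INR N / 2 ^ j)). nra. }
  lra.
Qed.

(* Splitting the approximation of F*G according to whether the shifted point
   is beyond x0: there G <= b F, which is bounded by b (F*F - F*trunc F x0). *)
Lemma window_approx_split_hi F G T x j N x0 b : subdistr F 1 -> Tval_ok T -> 0 <= b ->
  (forall z, x0 <= z -> window 1 T G z <= b * window 1 T F z) ->
  window_approx F G 1 1 T x j N <=
  b * (window_approx F F 1 1 T x j N - window_approx F (trunc F x0) 1 (F x0) T x j N) +
  (sum_f_R0 (fun k => if Rle_dec x0 (x + (1 - INR k) / 2 ^ j) then 0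
        else dyad_mass F j k * window 1 T G (x + (1 - INR k) / 2 ^ j)) N + approx_tail T F 1 1 j N).
Proof.
  intros HF HT Hb Hq. pose proof (trunc_subdistr F 1 x0 HF) as HF'.
  unfold window_approx.
  set (c := fun k => Rle_dec x0 (x + (1 - INR k) / 2 ^ j)).
  rewrite (sum_split_if _ c (fun k => dyad_mass F j k * window 1 T G (x + (1 - INR k) / 2 ^ j)) N).
  rewrite (sum_split_if _ c (fun k => dyad_mass F j k * window 1 T F (x + (1 - INR k) / 2 ^ j)) N).
  assert (Hnear : sum_f_R0 (fun k => if c k then dyad_mass F j k * window 1 T G (x + (1 - INR k) / 2 ^ j) else 0) N
     <= b * sum_f_R0 (fun k => if c k then dyad_mass F j k * window 1 T F (x + (1 - INR k) / 2 ^ j) else 0) N).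
  { rewrite <- sum_scal. apply sum_Rle. intros k _. destruct (c k) as [h|h]; [|lra].
    rewrite (Rmult_comm (dyad_mass F j k)), <- Rmult_assoc, (Rmult_comm b), Rmult_assoc.
    rewrite (Rmult_comm (dyad_mass F j k)).
    apply Rmult_le_compat_r. apply dyad_mass_nonneg with 1; auto. apply Hq; auto. }
  assert (Htrunc : sum_f_R0 (fun k => dyad_mass F j k * window (F x0) T (trunc F x0) (x + (1 - INR k) / 2 ^ j)) N
     <= sum_f_R0 (fun k => if c k then 0 else dyad_mass F j k * window 1 T F (x + (1 - INR k) / 2 ^ j)) N).
  { apply sum_Rle. intros k _. destruct (c k) as [h|h].
    - rewrite (window_trunc_zero F 1 x0 T); auto. lra.
    - apply Rmult_le_compat_l. apply dyad_mass_nonneg with 1; auto.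
      apply window_trunc_le; auto. apply (subdistr_le_mass F 1 HF). }
  assert (Htail : approx_tail T F 1 (F x0) j N <= approx_tail T F 1 1 j N).
  { destruct T; simpl. lra.
    pose proof (subdistr_le_mass F 1 HF x0). pose proof (subdistr_le_mass F 1 HF (INR N / 2 ^ j)). nra. }
  pose proof (Rmult_le_compat_l b _ _ Hb (Rplus_le_compat _ _ _ _ Htrunc Htail)) as Hscaled.
  unfold c in *. nra.
Qed.

Lemma split_rest_finite F G t x j N x0 : subdistr F 1 -> subdistr G 1 -> 0 < t ->
  sum_f_R0 (fun k => if Rle_dec x0 (x + (1 - INR k) / 2 ^ j) then 0
        else dyad_mass F j k * window 1 (Some t) G (x + (1 - INR k) / 2 ^ j)) N + approx_tail (Some t) F 1 1 j N
  <= window_approx F (trunc G (x0 + t)) 1 (G (x0 + t)) (Some t) x j N.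
Proof.
  intros HF HG Ht. unfold window_approx, approx_tail. rewrite !Rplus_0_r.
  apply sum_Rle. intros k _. destruct (Rle_dec _ _) as [h|h].
  - apply Rmult_le_pos. apply dyad_mass_nonneg with 1; auto.
    apply (window_nonneg _ (G (x0 + t))). apply trunc_subdistr with 1; auto. simpl; auto.
  - rewrite (window_trunc_eq G 1); auto. lra. lra.
Qed.

Lemma split_rest_infinite F G x j N x0 : subdistr F 1 -> subdistr G 1 ->
  0 <= x0 -> x0 <= x -> 1 + x * 2 ^ j <= INR N ->
  sum_f_R0 (fun k => if Rle_dec x0 (x + (1 - INR k) / 2 ^ j) then 0
        else dyad_mass F j k * window 1 None G (x + (1 - INR k) / 2 ^ j)) N + approx_tail None F 1 1 j N
  <= 1 - F (x - x0).
Proof.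
  intros HF HG Hx0 Hx HN. unfold approx_tail. pose proof (pow2_pos j) as Hp.
  assert (Hh : 0 < / 2 ^ j) by (apply Rinv_0_lt_compat; lra).
  set (c := fun k => Rle_dec x0 (x + (1 - INR k) / 2 ^ j)).
  assert (Hdrop : sum_f_R0 (fun k => if c k then 0 else dyad_mass F j k * window 1 None G (x + (1 - INR k) / 2 ^ j)) N
     <= sum_f_R0 (fun k => if c k then 0 else dyad_mass F j k) N).
  { apply sum_Rle. intros k _. destruct (c k); [lra|]. simpl.
    pose proof (dyad_mass_nonneg F 1 j k HF). pose proof (subdistr_nonneg G 1 HG (x + (1 - INR k) / 2 ^ j)). nra. }
  assert (Hcomplement : sum_f_R0 (fun k => if c k then 0 else dyad_mass F j k) N =
       F (INR N / 2 ^ j) - sum_f_R0 (fun k => if c k then dyad_mass F j k else 0) N).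
  { rewrite <- dyad_mass_sum. rewrite (sum_split_if _ c (dyad_mass F j) N). ring. }
  destruct (dyad_floor (x - x0) j) as [K [HK1 HK2]]; [lra|].
  assert (HKN : (S K <= N)%nat).
  { apply INR_le. pose proof (grid_point_ge x j N HN). rewrite S_INR in *.
    apply (Rmult_le_reg_r (/ 2 ^ j)); auto. unfold Rdiv in *. lra. }
  assert (Hfar : F (x - x0) <= sum_f_R0 (fun k => if c k then dyad_mass F j k else 0) N).
  { eapply Rle_trans; [|apply sum_mono_N; [|exact HKN]].
    2:{ intro k. destruct (c k). apply dyad_mass_nonneg with 1; auto. lra. }
    rewrite (sum_eq _ (dyad_mass F j)).
    - rewrite dyad_mass_sum. apply (subdistr_mono F 1 HF). lra.
    - intros i Hi. unfold c. destruct (Rle_dec _ _) as [h|h]; auto. exfalso. apply h.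
      apply le_INR in Hi. rewrite S_INR in Hi. unfold Rdiv in *. nra. }
  unfold c in *. lra.
Qed.

Lemma window_approx_upper_sum G F cG M t x e j N : subdistr G cG -> 0 <= window 1 (Some t) F x -> 0 <= e ->
  (forall y, -1 <= y <= M -> window 1 (Some t) F (x - y) <= (1 + e) * window 1 (Some t) F x) ->
  window_approx (trunc G M) F (G M) 1 (Some t) x j N <= (1 + e) * window 1 (Some t) F x * G M.
Proof.
  intros HG Hw He Hsh. pose proof (trunc_subdistr G cG M HG) as HG'.
  pose proof (pow2_pos j) as Hp. pose proof (inv_pow2_le1 j).
  assert (Hh : 0 < / 2 ^ j) by (apply Rinv_0_lt_compat; lra).
  unfold window_approx, approx_tail. rewrite Rplus_0_r.
  apply Rle_trans with ((1 + e) * window 1 (Some t) F x * sum_f_R0 (dyad_mass (trunc G M) j) N).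
  - rewrite <- sum_scal. apply sum_Rle. intros k _.
    destruct (Rle_dec M (INR k / 2 ^ j - / 2 ^ j)) as [h|h].
    + rewrite (dyad_mass_trunc_zero G cG M j k HG h). lra.
    + rewrite (Rmult_comm _ (dyad_mass _ _ _)). apply Rmult_le_compat_l.
      apply dyad_mass_nonneg with (G M); auto.
      rewrite grid_arg_eq. apply Hsh. pose proof (pos_INR k). split; [|lra].
      assert (0 <= INR k / 2 ^ j) by (unfold Rdiv; nra). lra.
  - rewrite dyad_mass_sum. apply Rmult_le_compat_l. nra.
    unfold trunc. apply Rmin_r.
Qed.

Lemma in_L_pos F T : in_L F T -> exists xp, forall x, xp <= x -> 0 < window 1 T F x.
Proof.
  intros [[xp H] _]. exists xp. intros x Hx. rewrite <- mass_int_window. apply H. lra.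
Qed.

Lemma in_L_ratio F T d : in_L F T -> 0 < d -> exists x1, forall x s, x1 <= x -> 0 <= s <= 1 ->
  0 < window 1 T F x /\ (1 - d) * window 1 T F x <= window 1 T F (x + s) <= (1 + d) * window 1 T F x.
Proof.
  intros HL Hd. destruct (in_L_pos F T HL) as [xp Hp].
  destruct HL as [_ HL]. destruct (HL d Hd) as [x1 H1].
  exists (Rmax xp x1). intros x s Hx Hs.
  assert (Hw : 0 < window 1 T F x) by (apply Hp; pose proof (Rmax_l xp x1); lra).
  split; auto.
  specialize (H1 x s ltac:(pose proof (Rmax_r xp x1); lra) Hs).
  rewrite !mass_int_window in H1. apply Rabs_def2 in H1.
  set (w := window 1 T F x) in *. set (w' := window 1 T F (x + s)) in *.
  assert (w' / w * w = w') by (field; lra).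
  split; nra.
Qed.

Lemma bernoulli d n : 0 <= d <= 1 -> 1 - INR n * d <= (1 - d) ^ n.
Proof.
  intro Hd. induction n. simpl; lra.
  rewrite S_INR. simpl. pose proof (pos_INR n). nra.
Qed.

Lemma pow_le_one x n : 0 <= x <= 1 -> x ^ n <= 1.
Proof.
  intro H. induction n. simpl; lra. simpl. pose proof (pow_le x n (proj1 H)). nra.
Qed.

Lemma pow_prod_le1 d n : 0 <= d <= 1 -> (1 + d) ^ n * (1 - d) ^ n <= 1.
Proof.
  intro Hd. rewrite <- Rpow_mult_distr. apply pow_le_one. nra.
Qed.

Lemma ratio_chain (W : R -> R) x1 d : 0 <= d <= 1 ->
  (forall u s, x1 <= u -> 0 <= s <= 1 -> 0 < W u /\ (1 - d) * W u <= W (u + s) <= (1 + d) * W u) ->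
  forall n u s, x1 <= u -> 0 <= s <= INR n ->
  (1 - d) ^ n * W u <= W (u + s) <= (1 + d) ^ n * W u.
Proof.
  intros Hd H n. induction n; intros u s Hu Hs.
  - simpl in Hs. replace s with 0 by lra. rewrite Rplus_0_r. simpl. lra.
  - destruct (Rle_dec s 1) as [h|h].
    + destruct (H u s Hu ltac:(lra)) as [Hw [H1 H2]].
      pose proof (pow_le_one (1 - d) n ltac:(lra)). pose proof (pow_R1_Rle (1 + d) n ltac:(lra)).
      pose proof (pow_le (1 - d) n ltac:(lra)).
      simpl. assert (A : 0 <= (1 - d) * W u) by nra. assert (B : 0 <= (1 + d) * W u) by nra.
      split.
      * replace ((1 - d) * (1 - d) ^ n * W u) with (((1 - d) * W u) * (1 - d) ^ n) by ring.
        assert (((1 - d) * W u) * (1 - d) ^ n <= ((1 - d) * W u) * 1) by (apply Rmult_le_compat_l; lra). lra.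
      * replace ((1 + d) * (1 + d) ^ n * W u) with (((1 + d) * W u) * (1 + d) ^ n) by ring.
        assert (((1 + d) * W u) * 1 <= ((1 + d) * W u) * (1 + d) ^ n) by (apply Rmult_le_compat_l; lra). lra.
    + rewrite S_INR in Hs.
      destruct (IHn u (s - 1) Hu ltac:(lra)) as [I1 I2].
      destruct (H (u + (s - 1)) 1 ltac:(lra) ltac:(lra)) as [Hw [H1 H2]].
      replace (u + (s - 1) + 1) with (u + s) in * by ring.
      destruct (H u 0 Hu ltac:(lra)) as [Hw0 _].
      pose proof (pow_le (1 - d) n ltac:(lra)). pose proof (pow_R1_Rle (1 + d) n ltac:(lra)).
      simpl. split; nra.
Qed.

Lemma window_shift F T e M : in_L F T -> 0 < e <= 1 -> 0 <= M ->
  exists x0, forall x, x0 <= x -> 0 < window 1 T F x /\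
    forall y, -1 <= y <= M ->
      (1 - e) * window 1 T F x <= window 1 T F (x - y) <= (1 + e) * window 1 T F x.
Proof.
  intros HL He HM. destruct (exists_nat_ge M) as [n Hn].
  pose proof (pos_INR n) as Hn0.
  set (d := e / (2 * (INR n + 1))).
  assert (Hd : 0 < d) by (apply Rdiv_lt_0_compat; lra).
  assert (Hnd : INR n * d <= e / 2).
  { unfold d. apply (Rmult_le_reg_r (2 * (INR n + 1))); [lra|].
    unfold Rdiv. field_simplify; [|lra]. nra. }
  assert (Hd1 : d <= e / 2).
  { unfold d. apply (Rmult_le_reg_r (2 * (INR n + 1))); [lra|].
    unfold Rdiv. field_simplify; [|lra]. nra. }
  destruct (in_L_ratio F T d HL Hd) as [x1 H1].
  exists (x1 + M + 1). intros x Hx.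
  destruct (H1 x 0 ltac:(lra) ltac:(lra)) as [Hw _]. split; auto.
  intros y Hy. set (W := window 1 T F) in *.
  destruct (Rle_dec 0 y) as [hy|hy].
  - pose proof (ratio_chain W x1 d ltac:(lra) H1 n (x - y) y ltac:(lra) ltac:(lra)) as [C1 C2].
    replace (x - y + y) with x in C1, C2 by ring.
    destruct (H1 (x - y) 0 ltac:(lra) ltac:(lra)) as [Hu _].
    pose proof (bernoulli d n ltac:(lra)).
    pose proof (pow_prod_le1 d n ltac:(lra)).
    pose proof (pow_le (1 - d) n ltac:(lra)).
    split.
    + assert ((1 - d) ^ n * W x <= W (x - y)) by nra. nra.
    + assert ((1 + e) * (1 - d) ^ n >= 1) by nra. nra.
  - destruct (H1 x (- y) ltac:(lra) ltac:(lra)) as [_ [C1 C2]].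
    replace (x + - y) with (x - y) in * by ring. split; nra.
Qed.

Lemma window_lower_on_compacts F T : in_L F T ->
  exists xl, forall a b, xl <= a -> exists w, 0 < w /\ forall z, a <= z <= b -> w <= window 1 T F z.
Proof.
  intros HL. destruct (in_L_ratio F T (1/2) HL ltac:(lra)) as [x1 H1].
  exists x1. intros a b Ha. destruct (exists_nat_ge (b - a)) as [n Hn].
  destruct (H1 a 0 Ha ltac:(lra)) as [Hwa _].
  exists ((1 - 1/2) ^ n * window 1 T F a). split.
  - apply Rmult_lt_0_compat; auto. apply pow_lt; lra.
  - intros z Hz. pose proof (ratio_chain (window 1 T F) x1 (1/2) ltac:(lra) H1 n a (z - a) Ha ltac:(lra)).
    replace (a + (z - a)) with z in H by ring. lra.
Qed.

(* Lower bound for the window of F*G: the parts of F*G where the F-summand is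
   small (below M) and where the G-summand is small (below M') each carry
   their own window mass. *)
Lemma conv_window_lower F G T a e M M' x z0 : subdistr F 1 -> subdistr G 1 -> Tval_ok T ->
  0 <= a -> 0 <= e <= 1 -> 0 <= M -> 0 <= M' -> M' <= x - M -> z0 <= x - M ->
  (forall z, z0 <= z -> a * window 1 T F z <= window 1 T G z) ->
  (forall y, -1 <= y <= Rmax M M' -> (1 - e) * window 1 T F x <= window 1 T F (x - y)) ->
  0 <= window 1 T F x ->
  (a * (1 - e) * F (M - 1) + (1 - e) * G (M' - 1)) * window 1 T F x <= window 1 T (conv F G) x.
Proof.
  intros HF HG HT Ha He HM HM' Hx1 Hx2 Hq Hsh Hw.
  pose proof (trunc_subdistr G 1 M' HG) as HG'.
  set (G' := trunc G M') in *.
  pose proof (fun j => grid_bound_window T x j HT) as HNx.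
  assert (Hsmall_F : a * (1 - e) * window 1 T F x * F (M - 1) + window (1 * G M') T (conv F G') x
               <= window (1 * 1) T (conv F G) x).
  { apply (cv_diff_lower_bound _ _ _ _ _ 0%nat (window_approx_cv F G 1 1 T x HF HG HT) (window_approx_cv F G' 1 (G M') T x HF HG' HT)).
    intros j _. eapply Rle_trans; [|apply (window_approx_split_lo F G T x j _ M M'); auto].
    apply Rplus_le_compat_r.
    apply (window_approx_lower_sum F G 1 1 T (window 1 T F) a e M x z0 j); auto; try lra.
    - specialize (HNx j). lra.
    - intros y Hy. apply Hsh. pose proof (Rmax_l M M'). lra. }
  rewrite Rmult_1_l in Hsmall_F.
  rewrite (window_conv_comm F G' 1 (G M')) in Hsmall_F by auto.
  assert (Hsmall_G : 1 * (1 - e) * window 1 T F x * G' (M' - 1) <= window (G M' * 1) T (conv G' F) x).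
  { apply (cv_lower_bound _ _ _ 0%nat (window_approx_cv G' F (G M') 1 T x HG' HF HT)).
    intros j _. eapply Rle_trans; [|apply (window_approx_ge_restr G' F (G M') 1 T x j _ M'); auto].
    apply (window_approx_lower_sum G' F (G M') 1 T (window 1 T F) 1 e M' x (x - M') j); auto; try lra.
    - specialize (HNx j). lra.
    - intros; lra.
    - intros y Hy. apply Hsh. pose proof (Rmax_r M M'). lra. }
  rewrite Rmult_1_r in Hsmall_G.
  assert (G' (M' - 1) = G (M' - 1)).
  { unfold G', trunc. pose proof (subdistr_mono G 1 HG (M' - 1) M' ltac:(lra)). unfold Rmin.
    destruct (Rle_dec _ _); lra. }
  rewrite H in Hsmall_G. rewrite Rmult_1_l in Hsmall_G.
  assert (window 1 T (conv F G) x = window (1 * 1) T (conv F G) x) by (rewrite Rmult_1_l; auto).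
  lra.
Qed.

Lemma conv_window_lower_step F G T c : subdistr F 1 -> subdistr G 1 -> Tval_ok T -> in_L F T -> 0 <= c ->
  (forall e, 0 < e -> exists z0, forall z, z0 <= z -> (c - e) * window 1 T F z <= window 1 T G z) ->
  forall e, 0 < e -> exists x2, forall x, x2 <= x -> (c + 1 - e) * window 1 T F x <= window 1 T (conv F G) x.
Proof.
  intros HF HG HT HL Hc HG1 eps Heps.
  set (e := Rmin (1/2) (eps / (4 * (c + 1)))).
  assert (He : 0 < e /\ e <= 1/2 /\ e * (c + 1) <= eps / 4).
  { unfold e. split; [apply Rmin_glb_lt; [lra| apply Rdiv_lt_0_compat; lra]|split; [apply Rmin_l|]].
    pose proof (Rmin_r (1/2) (eps / (4 * (c + 1)))).
    replace (eps / 4) with (eps / (4 * (c + 1)) * (c + 1)) by (field; lra). nra. }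
  destruct He as [He1 [He2 He3]].
  destruct (HG1 (eps / 2) ltac:(lra)) as [z0 Hz0].
  destruct (subdistr_near_mass F 1 e 0 HF He1) as [M [_ [HM HFM]]].
  destruct (subdistr_near_mass G 1 e 0 HG He1) as [M' [_ [HM' HGM]]].
  destruct (window_shift F T e (Rmax M M') HL ltac:(lra) ltac:(pose proof (Rmax_l M M'); lra)) as [xs Hs].
  set (a := Rmax 0 (c - eps / 2)).
  exists (Rmax xs (Rmax (M + M') (M + z0))). intros x Hx.
  pose proof (Rmax_l xs (Rmax (M + M') (M + z0))). pose proof (Rmax_r xs (Rmax (M + M') (M + z0))).
  pose proof (Rmax_l (M + M') (M + z0)). pose proof (Rmax_r (M + M') (M + z0)).
  destruct (Hs x ltac:(lra)) as [Hw Hsh].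
  assert (Hlower := conv_window_lower F G T a e M M' x z0 HF HG HT (Rmax_l _ _) ltac:(lra) HM HM' ltac:(lra) ltac:(lra)).
  assert (Hq : forall z, z0 <= z -> a * window 1 T F z <= window 1 T G z).
  { intros z Hz. unfold a. pose proof (window_nonneg F 1 T z HF HT). pose proof (window_nonneg G 1 T z HG HT).
    unfold Rmax. destruct (Rle_dec 0 (c - eps / 2)).
    - apply Hz0; auto.
    - lra. }
  specialize (Hlower Hq (fun y Hy => proj1 (Hsh y Hy)) ltac:(lra)).
  eapply Rle_trans; [|exact Hlower].
  apply Rmult_le_compat_r; [lra|].
  assert (Ha : c - eps / 2 <= a) by apply Rmax_r. assert (Ha0 : 0 <= a) by apply Rmax_l.
  assert (a * (1 - e) * F (M - 1) >= a * (1 - e) * (1 - e)).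
  { apply Rle_ge. apply Rmult_le_compat_l; [nra|lra]. }
  assert ((1 - e) * G (M' - 1) >= (1 - e) * (1 - e)) by nra.
  assert (a * (1 - e) * (1 - e) >= (c - eps / 2) * (1 - e) * (1 - e)) by nra.
  nra.
Qed.

Lemma conv_pow_window_lower F T : subdistr F 1 -> Tval_ok T -> in_L F T -> forall n e, 0 < e ->
  exists x1, forall x, x1 <= x -> (INR (S n) - e) * window 1 T F x <= window 1 T (conv_pow F (S n)) x.
Proof.
  intros HF HT HL n. induction n; intros e He.
  - exists 0. intros x _. rewrite window_conv_pow_1 by auto. pose proof (window_nonneg F 1 T x HF HT). simpl. nra.
  - destruct (conv_window_lower_step F (conv_pow F (S n)) T (INR (S n)) HF (conv_pow_subdistr F (S n) HF) HT HL (pos_INR _) IHn e He)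
      as [x2 H]. exists x2. intros x Hx. rewrite S_INR. apply H; auto.
Qed.

(* The half of subexponentiality that the upper bounds need:
   (F*F)(x+Delta) <= 2(1+e) F(x+Delta) eventually, for every e > 0. *)
Definition subexp_upper (F : R -> R) (T : option R) : Prop :=
  forall e, 0 < e -> exists xf, forall x, xf <= x ->
    window 1 T (conv F F) x <= 2 * (1 + e) * window 1 T F x.

(* The truncation of F at x0 already carries a proportion F(x0-1) of the
   window mass at x; this part is subtracted in the upper bound. *)
Lemma conv_trunc_window_lower F T e x0 x : subdistr F 1 -> Tval_ok T ->
  0 <= e <= 1 -> 0 <= x0 -> x0 <= x - x0 ->
  (forall y, -1 <= y <= x0 -> (1 - e) * window 1 T F x <= window 1 T F (x - y)) ->
  0 <= window 1 T F x ->
  (1 - e) * window 1 T F x * F (x0 - 1) <= window (F x0) T (conv F (trunc F x0)) x.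
Proof.
  intros HF HT He Hx0 Hx Hlo Hw.
  pose proof (trunc_subdistr F 1 x0 HF) as HF'.
  pose proof (fun j => grid_bound_window T x j HT) as HNx.
  rewrite (window_conv_comm F (trunc F x0) 1 (F x0)) by auto.
  rewrite <- (Rmult_1_r (F x0)).
  replace (F (x0 - 1)) with (trunc F x0 (x0 - 1)).
  2:{ unfold trunc. pose proof (subdistr_mono F 1 HF (x0 - 1) x0 ltac:(lra)). unfold Rmin.
      destruct (Rle_dec _ _); lra. }
  replace ((1 - e) * window 1 T F x) with (1 * (1 - e) * window 1 T F x) by ring.
  apply (cv_lower_bound _ _ _ 0%nat (window_approx_cv (trunc F x0) F (F x0) 1 T x HF' HF HT)).
  intros j _. eapply Rle_trans; [|apply (window_approx_ge_restr _ F (F x0) 1 T x j _ x0); auto].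
  apply (window_approx_lower_sum (trunc F x0) F (F x0) 1 T (window 1 T F) 1 e x0 x (x - x0) j);
    auto; try lra.
  - specialize (HNx j). lra.
  - intros; lra.
Qed.

Lemma conv_window_split_upper F G T b e x0 x : subdistr F 1 -> subdistr G 1 -> Tval_ok T ->
  0 <= b -> 0 <= e -> 0 <= x0 -> x0 <= x - x0 ->
  (forall z, x0 <= z -> window 1 T G z <= b * window 1 T F z) ->
  (forall y, -1 <= y <= x0 + window_len T -> window 1 T F (x - y) <= (1 + e) * window 1 T F x) ->
  0 <= window 1 T F x ->
  window 1 T (conv F G) x <=
  b * (window 1 T (conv F F) x - window (F x0) T (conv F (trunc F x0)) x) + (1 + e) * window 1 T F x.
Proof.
  intros HF HG HT Hb He Hx0 Hx Hq Hhi Hw.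
  pose proof (trunc_subdistr F 1 x0 HF) as HF'.
  assert (HNx : forall j, 1 + x * 2 ^ j <= INR (grid_bound (window_right T x) j)).
  { intro j. apply grid_bound_ok. destruct T; simpl in *; lra. }
  rewrite <- (Rmult_1_l 1) at 1 2. rewrite <- (Rmult_1_l (F x0)) at 1.
  destruct T as [t|]; simpl in HT, Hhi.
  - pose proof (trunc_subdistr G 1 (x0 + t) HG) as HG'.
    assert (Hrest : window (1 * G (x0 + t)) (Some t) (conv F (trunc G (x0 + t))) x
                    <= (1 + e) * window 1 (Some t) F x).
    { rewrite (window_conv_comm F _ 1 (G (x0 + t))) by auto.
      replace (1 * G (x0 + t)) with (G (x0 + t) * 1) by ring.
      apply (cv_upper_bound _ _ _ 0%nat
               (window_approx_cv (trunc G (x0 + t)) F (G (x0 + t)) 1 (Some t) x HG' HF HT)).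
      intros j _. eapply Rle_trans.
      { apply (window_approx_upper_sum G F 1 (x0 + t) t x e j); auto; lra. }
      pose proof (subdistr_le_mass G 1 HG (x0 + t)). pose proof (subdistr_nonneg G 1 HG (x0 + t)).
      assert (0 <= (1 + e) * window 1 (Some t) F x) by (apply Rmult_le_pos; lra). nra. }
    eapply Rplus_le_compat_l in Hrest. eapply Rle_trans; [|exact Hrest].
    eapply Rle_cv_lim; [| apply (window_approx_cv F G 1 1 (Some t) x HF HG HT) |].
    2:{ apply CV_plus. apply CV_mult. apply Un_cv_const. apply CV_minus.
        apply (window_approx_cv F F 1 1 (Some t) x HF HF HT).
        apply (window_approx_cv F (trunc F x0) 1 (F x0) (Some t) x HF HF' HT).
        apply (window_approx_cv F (trunc G (x0 + t)) 1 (G (x0 + t)) (Some t) x HF HG' HT). }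
    intro j. simpl. eapply Rle_trans. apply (window_approx_split_hi F G (Some t) x j _ x0 b); auto.
    apply Rplus_le_compat_l. apply split_rest_finite; auto.
  - specialize (Hhi x0 ltac:(lra)). simpl in Hhi.
    eapply Rle_trans; [|apply Rplus_le_compat_l; exact Hhi].
    eapply Rle_cv_lim; [| apply (window_approx_cv F G 1 1 None x HF HG HT) |].
    2:{ apply CV_plus. apply CV_mult. apply Un_cv_const. apply CV_minus.
        apply (window_approx_cv F F 1 1 None x HF HF HT).
        apply (window_approx_cv F (trunc F x0) 1 (F x0) None x HF HF' HT).
        apply Un_cv_const. }
    intro j. simpl. eapply Rle_trans. apply (window_approx_split_hi F G None x j _ x0 b); auto.
    apply Rplus_le_compat_l. apply split_rest_infinite; auto. lra.
Qed.

Lemma conv_window_upper F G T b e x0 x : subdistr F 1 -> subdistr G 1 -> Tval_ok T ->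
  0 <= b -> 0 <= e <= 1 -> 0 <= x0 -> x0 <= x - x0 ->
  (forall z, x0 <= z -> window 1 T G z <= b * window 1 T F z) ->
  window 1 T (conv F F) x <= 2 * (1 + e) * window 1 T F x ->
  (forall y, -1 <= y <= x0 -> (1 - e) * window 1 T F x <= window 1 T F (x - y)) ->
  (forall y, -1 <= y <= x0 + window_len T -> window 1 T F (x - y) <= (1 + e) * window 1 T F x) ->
  0 <= window 1 T F x ->
  window 1 T (conv F G) x <=
  b * (2 * (1 + e) - (1 - e) * F (x0 - 1)) * window 1 T F x + (1 + e) * window 1 T F x.
Proof.
  intros HF HG HT Hb He Hx0 Hx Hq Hff Hlo Hhi Hw.
  pose proof (conv_trunc_window_lower F T e x0 x HF HT He Hx0 Hx Hlo Hw) as Htrunc.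
  pose proof (conv_window_split_upper F G T b e x0 x HF HG HT Hb ltac:(lra) Hx0 Hx Hq Hhi Hw) as Hsplit.
  assert (b * (window 1 T (conv F F) x - window (F x0) T (conv F (trunc F x0)) x) <=
          b * (2 * (1 + e) * window 1 T F x - (1 - e) * window 1 T F x * F (x0 - 1))).
  { apply Rmult_le_compat_l; lra. }
  replace (b * (2 * (1 + e) - (1 - e) * F (x0 - 1)) * window 1 T F x) with
    (b * (2 * (1 + e) * window 1 T F x - (1 - e) * window 1 T F x * F (x0 - 1))) by ring.
  lra.
Qed.

Lemma conv_window_upper_step F T : subdistr F 1 -> Tval_ok T -> in_L F T ->
  subexp_upper F T ->
  forall e, 0 < e <= 1 -> forall B, exists x0, B <= x0 /\ exists x2,
  forall G, subdistr G 1 -> forall b, 0 <= b -> (forall z, x0 <= z -> window 1 T G z <= b * window 1 T F z) ->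
  forall x, x2 <= x -> window 1 T (conv F G) x <= (b * (1 + 4 * e) + (1 + e)) * window 1 T F x.
Proof.
  intros HF HT HL Hff e He B.
  destruct (subdistr_near_mass F 1 e B HF ltac:(lra)) as [x0 [HB [Hx0 HFx0]]].
  exists x0. split; auto.
  pose proof (window_len_nonneg T HT).
  destruct (window_shift F T e (x0 + window_len T) HL He ltac:(lra)) as [xs Hs].
  destruct (Hff e ltac:(lra)) as [xf Hf].
  exists (Rmax xs (Rmax xf (2 * x0))). intros G HG b Hb Hq x Hx.
  pose proof (Rmax_l xs (Rmax xf (2 * x0))). pose proof (Rmax_r xs (Rmax xf (2 * x0))).
  pose proof (Rmax_l xf (2 * x0)). pose proof (Rmax_r xf (2 * x0)).
  destruct (Hs x ltac:(lra)) as [Hw Hsh].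
  assert (Hupper := conv_window_upper F G T b e x0 x HF HG HT Hb ltac:(lra) Hx0 ltac:(lra) Hq (Hf x ltac:(lra))).
  specialize (Hupper (fun y Hy => proj1 (Hsh y ltac:(lra))) (fun y Hy => proj2 (Hsh y ltac:(lra))) ltac:(lra)).
  eapply Rle_trans; [exact Hupper|].
  assert (2 * (1 + e) - (1 - e) * F (x0 - 1) <= 1 + 4 * e) by nra.
  assert (b * (2 * (1 + e) - (1 - e) * F (x0 - 1)) <= b * (1 + 4 * e)) by (apply Rmult_le_compat_l; lra).
  assert (b * (2 * (1 + e) - (1 - e) * F (x0 - 1)) * window 1 T F x <= b * (1 + 4 * e) * window 1 T F x)
    by (apply Rmult_le_compat_r; lra).
  lra.
Qed.

Lemma conv_pow_window_upper F T : subdistr F 1 -> Tval_ok T -> in_L F T ->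
  subexp_upper F T ->
  forall n e, 0 < e ->
  exists x1, forall x, x1 <= x -> window 1 T (conv_pow F (S n)) x <= (INR (S n) + e) * window 1 T F x.
Proof.
  intros HF HT HL Hff n. induction n; intros eps Heps.
  - exists 0. intros x _. rewrite window_conv_pow_1 by auto. pose proof (window_nonneg F 1 T x HF HT). simpl. nra.
  - set (c := INR (S n)). pose proof (pos_INR (S n)) as Hc. fold c in Hc.
    set (e := Rmin 1 (eps / (4 * c + 6))).
    assert (He : 0 < e <= 1 /\ e * (4 * c + 6) <= eps).
    { unfold e. split; [split; [apply Rmin_glb_lt; [lra| apply Rdiv_lt_0_compat; lra]| apply Rmin_l]|].
      pose proof (Rmin_r 1 (eps / (4 * c + 6))).
      replace eps with (eps / (4 * c + 6) * (4 * c + 6)) at 2 by (field; lra). nra. }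
    destruct He as [He1 He2].
    destruct (IHn e ltac:(lra)) as [z1 Hz1].
    destruct (conv_window_upper_step F T HF HT HL Hff e He1 z1) as [x0 [Hx0 [x2 H2]]].
    exists x2. intros x Hx.
    assert (Hupper := H2 (conv_pow F (S n)) (conv_pow_subdistr F (S n) HF) (c + e) ltac:(lra)
       (fun z Hz => Hz1 z ltac:(lra)) x Hx).
    simpl conv_pow. eapply Rle_trans; [exact Hupper|].
    rewrite S_INR. fold c. apply Rmult_le_compat_r. apply (window_nonneg F 1); auto.
    nra.
Qed.

(* Kesten's bound: F^{*(n+1)}(x+Delta) <= V ((1+4e)(1+e))^n F(x+Delta) for all
   n and all large x; small x are handled by the lower bound on compacts. *)
Lemma kesten_bound F T : subdistr F 1 -> Tval_ok T -> in_L F T ->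
  subexp_upper F T ->
  forall e, 0 < e <= 1 -> exists V, 0 <= V /\ exists xk, forall n x, xk <= x ->
    window 1 T (conv_pow F (S n)) x <= V * ((1 + 4 * e) * (1 + e)) ^ n * window 1 T F x.
Proof.
  intros HF HT HL Hff e He.
  destruct (window_lower_on_compacts F T HL) as [xl Hl].
  destruct (conv_window_upper_step F T HF HT HL Hff e He xl) as [x0 [Hx0 [x2 H2]]].
  destruct (Hl x0 (Rmax x0 x2) Hx0) as [w [Hw Hwz]].
  set (V := Rmax 1 (Rmax (2 / e) (1 / w))).
  assert (HV1 : 1 <= V) by apply Rmax_l.
  assert (HV2 : 2 / e <= V) by (eapply Rle_trans; [apply Rmax_l|apply Rmax_r]).
  assert (HV3 : 1 / w <= V) by (eapply Rle_trans; [apply Rmax_r|apply Rmax_r]).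
  assert (HVe : 2 <= V * e).
  { replace 2 with (2 / e * e) by (field; lra). apply Rmult_le_compat_r; lra. }
  assert (HVw : 1 <= V * w).
  { replace 1 with (1 / w * w) at 1 by (field; lra). apply Rmult_le_compat_r; lra. }
  set (r := (1 + 4 * e) * (1 + e)).
  assert (Hr : 1 <= r) by (unfold r; nra).
  exists V. split; [lra|]. exists x0.
  intro n. induction n; intros x Hx.
  - rewrite window_conv_pow_1 by auto. simpl. pose proof (window_nonneg F 1 T x HF HT). nra.
  - pose proof (window_nonneg F 1 T x HF HT) as HW.
    pose proof (pow_R1_Rle r n Hr) as Hrn.
    destruct (Rle_dec x2 x) as [hx|hx].
    + assert (Hupper := H2 (conv_pow F (S n)) (conv_pow_subdistr F (S n) HF) (V * r ^ n) ltac:(nra)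
         (fun z Hz => IHn z Hz) x hx).
      simpl conv_pow. eapply Rle_trans; [exact Hupper|].
      apply Rmult_le_compat_r; auto.
      replace (V * r ^ S n) with (V * r ^ n * (1 + 4 * e) + V * e * (r ^ n * (1 + 4 * e))) by (simpl; unfold r; ring).
      assert (A : 1 <= r ^ n * (1 + 4 * e)) by nra.
      assert (B : V * e * 1 <= V * e * (r ^ n * (1 + 4 * e))) by (apply Rmult_le_compat_l; nra).
      lra.
    + assert (window 1 T (conv_pow F (S (S n))) x <= 1) by (apply window_le_mass; auto; apply conv_pow_subdistr; auto).
      assert (w <= window 1 T F x) by (apply Hwz; pose proof (Rmax_r x0 x2); lra).
      assert (1 <= V * window 1 T F x) by nra.
      pose proof (pow_R1_Rle r (S n) Hr). nra.
Qed.

Lemma eventually_uniform_finite (P : nat -> R -> Prop) :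
  (forall n, exists t, forall t', t <= t' -> P n t') ->
  forall N, exists t, forall n t', (n <= N)%nat -> t <= t' -> P n t'.
Proof.
  intros H N. induction N.
  - destruct (H 0%nat) as [t Ht]. exists t. intros n t' Hn Ht'. replace n with 0%nat by lia. auto.
  - destruct IHN as [t1 H1]. destruct (H (S N)) as [t2 H2]. exists (Rmax t1 t2).
    intros n t' Hn Ht'. pose proof (Rmax_l t1 t2). pose proof (Rmax_r t1 t2).
    destruct (Nat.eq_dec n (S N)). subst. apply H2; lra. apply H1; [lia|lra].
Qed.

Definition weighted_geom (a : R) (N : nat) : R := sum_f_R0 (fun n => (INR n + 1) * a ^ n) N.

Lemma weighted_geom_closed a N :
  (1 - a) ^ 2 * weighted_geom a N = 1 - (INR N + 2) * a ^ (S N) + (INR N + 1) * a ^ (S (S N)).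
Proof.
  unfold weighted_geom. induction N.
  - simpl. ring.
  - rewrite tech5. rewrite Rmult_plus_distr_l, IHN. rewrite S_INR. simpl. ring.
Qed.

Lemma binom_lb s n : 0 <= s -> 1 + INR n * s + INR n * (INR n - 1) / 2 * s ^ 2 <= (1 + s) ^ n.
Proof.
  intro Hs. induction n.
  - simpl. lra.
  - rewrite S_INR. simpl.
    assert (0 <= INR n * (INR n - 1)).
    { destruct n. simpl; lra. rewrite S_INR. pose proof (pos_INR n). nra. }
    assert (0 <= INR n * (INR n - 1) / 2 * s ^ 2 * s).
    { apply Rmult_le_pos; auto. apply Rmult_le_pos. lra. simpl. nra. }
    simpl in IHn. nra.
Qed.

Lemma poly_geom_small a : 0 < a < 1 -> forall eta, 0 < eta -> exists N0, forall N, (N0 <= N)%nat ->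
  (INR N + 2) * a ^ (S N) <= eta.
Proof.
  intros Ha eta He. set (s := (1 - a) / a).
  assert (Hs : 0 < s) by (apply Rdiv_lt_0_compat; lra).
  assert (Has : a * (1 + s) = 1) by (unfold s; field; lra).
  destruct (exists_nat_ge (4 / (eta * s ^ 2))) as [N0 HN0].
  exists (S N0). intros N HN.
  assert (HN' : 4 / (eta * s ^ 2) + 1 <= INR N).
  { apply le_INR in HN. rewrite S_INR in HN. lra. }
  pose proof (binom_lb s (S N) ltac:(lra)) as Hb.
  (* a = 1/(1+s), and the quadratic term of (1+s)^(N+1) forces
     a^(N+1) <= 2 / ((N+1) N s^2). *)
  assert (Hprod : a ^ (S N) * (1 + s) ^ (S N) = 1).
  { rewrite <- Rpow_mult_distr, Has. apply pow1. }
  rewrite S_INR in Hb.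
  assert (Hpos : 0 < 4 / (eta * s ^ 2)) by (apply Rdiv_lt_0_compat; [lra| apply Rmult_lt_0_compat; auto; simpl; nra]).
  assert (HN1 : 1 <= INR N) by lra.
  assert (Ha0 : 0 < a ^ S N) by (apply pow_lt; lra).
  assert (H1 : a ^ S N * ((INR N + 1) * INR N / 2 * s ^ 2) <= 1).
  { assert (X : a ^ S N * ((INR N + 1) * INR N / 2 * s ^ 2) <= a ^ S N * (1 + s) ^ S N).
    { apply Rmult_le_compat_l; [lra|].
      replace ((INR N + 1) * INR N / 2) with ((INR N + 1) * (INR N + 1 - 1) / 2) by field.
      assert (0 <= (INR N + 1) * s) by nra. lra. }
    rewrite Hprod in X. exact X. }
  assert (Hs2 : 0 < s ^ 2) by (simpl; nra).
  assert (H2 : eta * s ^ 2 * INR N >= 4).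
  { assert (INR N >= 4 / (eta * s ^ 2)) by lra.
    assert (0 < eta * s ^ 2) by nra.
    apply Rle_ge. replace 4 with (4 / (eta * s ^ 2) * (eta * s ^ 2)) by (field; lra). nra. }
  assert (H3 : (INR N + 2) * a ^ S N * (INR N * s ^ 2) <= 4).
  { assert ((INR N + 2) <= 2 * (INR N + 1)) by lra. nra. }
  assert (0 < INR N * s ^ 2) by nra.
  nra.
Qed.

Lemma weighted_geom_cv a : 0 < a < 1 -> forall eta, 0 < eta -> exists N0, forall N, (N0 <= N)%nat ->
  0 <= 1 / (1 - a) ^ 2 - weighted_geom a N <= eta.
Proof.
  intros Ha eta He.
  assert (Hq : 0 < (1 - a) ^ 2) by (simpl; nra).
  destruct (poly_geom_small a Ha (eta * (1 - a) ^ 2)) as [N0 H0]; [nra|].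
  exists N0. intros N HN. specialize (H0 N HN).
  pose proof (weighted_geom_closed a N) as Hc.
  assert (E : 1 / (1 - a) ^ 2 - weighted_geom a N = ((INR N + 2) * a ^ S N - (INR N + 1) * a ^ S (S N)) / (1 - a) ^ 2).
  { apply (Rmult_eq_reg_l ((1 - a) ^ 2)); [|lra]. rewrite Rmult_minus_distr_l, Hc. field. lra. }
  rewrite E. pose proof (pos_INR N). pose proof (pow_lt a (S N) (proj1 Ha)).
  assert (Ea : a ^ S (S N) = a * a ^ S N) by reflexivity. rewrite Ea.
  split.
  - apply Rmult_le_pos.
    replace ((INR N + 2) * a ^ S N - (INR N + 1) * (a * a ^ S N)) with (a ^ S N * ((INR N + 2) - (INR N + 1) * a)) by ring.
    apply Rmult_le_pos; nra. left; apply Rinv_0_lt_compat; auto.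
  - apply (Rmult_le_reg_r ((1 - a) ^ 2)); auto. unfold Rdiv. rewrite Rmult_assoc, Rinv_l by lra. assert (0 <= (INR N + 1) * (a * a ^ S N)) by (apply Rmult_le_pos; nra). lra.
Qed.

Lemma geom_sum_le a N : 0 <= a < 1 -> sum_f_R0 (fun n => a ^ n) N <= 1 / (1 - a).
Proof.
  intro Ha. rewrite tech3 by lra. unfold Rdiv.
  apply Rmult_le_compat_r. left; apply Rinv_0_lt_compat; lra.
  pose proof (pow_le a (S N) (proj1 Ha)). lra.
Qed.

Lemma tail_bound c V rho L N : 0 <= rho < 1 -> 0 <= V ->
  (forall n, 0 <= c n <= V * rho ^ n) ->
  Un_cv (fun M => sum_f_R0 c M) L ->
  0 <= L - sum_f_R0 c N <= V * rho ^ (S N) / (1 - rho).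
Proof.
  intros Hr HV Hc HL. split.
  - pose proof (sum_incr c N L HL (fun n => proj1 (Hc n))). lra.
  - assert (L <= sum_f_R0 c N + V * rho ^ S N / (1 - rho)); [|lra].
    apply (cv_upper_bound _ _ _ (S N) HL). intros M HM.
    destruct (Nat.eq_dec M (S N)) as [e|e].
    + subst. rewrite tech5. specialize (Hc (S N)).
      assert (V * rho ^ S N <= V * rho ^ S N / (1 - rho)).
      { unfold Rdiv. rewrite <- (Rmult_1_r (V * rho ^ S N)) at 1. apply Rmult_le_compat_l.
        apply Rmult_le_pos; auto. apply pow_le; lra.
        rewrite <- Rinv_1. apply Rinv_le_contravar; lra. }
      lra.
    + rewrite (tech2 c N M) by lia.
      apply Rplus_le_compat_l.
      apply Rle_trans with (sum_f_R0 (fun i => V * rho ^ S N * rho ^ i) (M - S N)).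
      * apply sum_Rle. intros i _. specialize (Hc (S N + i)%nat). rewrite pow_add in Hc. lra.
      * rewrite sum_scal. rewrite tech3 by lra. unfold Rdiv.
        pose proof (pow_le rho (S (M - S N)) (proj1 Hr)).
        assert (0 <= V * rho ^ S N) by (apply Rmult_le_pos; auto; apply pow_le; lra).
        assert (0 < / (1 - rho)) by (apply Rinv_0_lt_compat; lra).
        rewrite <- Rmult_assoc. apply Rmult_le_compat_r; [lra|].
        rewrite <- (Rmult_1_r (V * rho ^ S N)) at 2. apply Rmult_le_compat_l; lra.
Qed.

Lemma geom_small rho V eta : 0 <= rho < 1 -> 0 <= V -> 0 < eta ->
  exists N0, forall N, (N0 <= N)%nat -> V * rho ^ (S N) / (1 - rho) <= eta.
Proof.
  intros Hr HV He.
  destruct (pow_lt_1_zero rho ltac:(rewrite Rabs_right; lra) (eta * (1 - rho) / (V + 1))) as [N0 H0].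
  { apply Rdiv_lt_0_compat; [apply Rmult_lt_0_compat|]; lra. }
  exists N0. intros N HN. specialize (H0 (S N) ltac:(lia)).
  rewrite Rabs_right in H0 by (apply Rle_ge, pow_le; lra).
  apply (Rmult_le_reg_r (1 - rho)); [lra|]. unfold Rdiv. rewrite Rmult_assoc, Rinv_l, Rmult_1_r by lra.
  apply (Rmult_lt_compat_l (V + 1)) in H0; [|lra].
  replace ((V + 1) * (eta * (1 - rho) / (V + 1))) with (eta * (1 - rho)) in H0 by (field; lra).
  pose proof (pow_le rho (S N) (proj1 Hr)). nra.
Qed.

Lemma partial_sum_near_weighted a w (wn : nat -> R) eta N : 0 < a < 1 -> 0 < w -> 0 <= eta ->
  (forall n, (n <= N)%nat ->
     (INR n + 1 - eta * (1 - a)) * w <= wn n <= (INR n + 1 + eta * (1 - a)) * w) ->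
  Rabs (sum_f_R0 (fun n => a ^ n * wn n) N - weighted_geom a N * w) <= eta * w.
Proof.
  intros Ha Hw Heta Hn. set (eta' := eta * (1 - a)).
  assert (Hdiff : sum_f_R0 (fun n => a ^ n * wn n) N - weighted_geom a N * w =
     sum_f_R0 (fun n => a ^ n * (wn n - (INR n + 1) * w)) N).
  { unfold weighted_geom. rewrite <- sum_scal_r, <- minus_sum. apply sum_eq. intros; ring. }
  assert (Hgs : sum_f_R0 (fun n => a ^ n) N <= 1 / (1 - a)) by (apply geom_sum_le; lra).
  assert (Hg0 : 0 <= sum_f_R0 (fun n => a ^ n) N) by (apply cond_pos_sum; intro; apply pow_le; lra).
  assert (B : eta' * w * sum_f_R0 (fun n => a ^ n) N <= eta * w).
  { unfold eta'. replace (eta * (1 - a) * w * sum_f_R0 (fun n => a ^ n) N) with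
      ((eta * w) * ((1 - a) * sum_f_R0 (fun n => a ^ n) N)) by ring.
    rewrite <- (Rmult_1_r (eta * w)) at 2. apply Rmult_le_compat_l; [nra|].
    apply (Rmult_le_compat_l (1 - a)) in Hgs; [|lra].
    replace ((1 - a) * (1 / (1 - a))) with 1 in Hgs by (field; lra). lra. }
  rewrite Hdiff. apply Rabs_le. split.
  - apply Rle_trans with (- (eta' * w * sum_f_R0 (fun n => a ^ n) N)); [lra|].
    replace (- (eta' * w * sum_f_R0 (fun n => a ^ n) N)) with
      (sum_f_R0 (fun n => - (eta' * w) * a ^ n) N)
      by (rewrite (sum_scal (- (eta' * w)) (fun n => a ^ n)); ring).
    apply sum_Rle. intros n HnN. destruct (Hn n HnN) as [A1 A2].
    pose proof (pow_le a n ltac:(lra)). unfold eta'. nra.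
  - eapply Rle_trans; [|exact B]. rewrite <- sum_scal.
    apply sum_Rle. intros n HnN. destruct (Hn n HnN) as [A1 A2].
    pose proof (pow_le a n ltac:(lra)). unfold eta'. nra.
Qed.

Lemma series_tail_dominated a q V w (wn : nat -> R) l eta N :
  0 < a < 1 -> 0 <= q -> a * q < 1 -> 0 <= V -> 0 <= w ->
  (forall n, 0 <= wn n <= V * q ^ n * w) ->
  Un_cv (fun M => sum_f_R0 (fun n => a ^ n * wn n) M) l ->
  V * (a * q) ^ (S N) / (1 - a * q) <= eta ->
  0 <= l - sum_f_R0 (fun n => a ^ n * wn n) N <= eta * w.
Proof.
  intros Ha Hq Haq HV Hw Hwn Hl Hsmall.
  assert (Hrho : 0 <= a * q < 1) by (split; [nra|lra]).
  assert (Hc : forall n, 0 <= a ^ n * wn n <= (V * w) * (a * q) ^ n).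
  { intro n. destruct (Hwn n) as [H0 H1]. pose proof (pow_le a n ltac:(lra)). split.
    - apply Rmult_le_pos; auto.
    - rewrite Rpow_mult_distr.
      replace (V * w * (a ^ n * q ^ n)) with (a ^ n * (V * q ^ n * w)) by ring.
      apply Rmult_le_compat_l; auto. }
  pose proof (tail_bound (fun n => a ^ n * wn n) (V * w) (a * q) l N Hrho
                ltac:(nra) Hc Hl) as [H0 H1].
  split; auto. eapply Rle_trans; [exact H1|].
  replace ((V * w) * (a * q) ^ S N / (1 - a * q)) with (V * (a * q) ^ S N / (1 - a * q) * w)
    by (field; lra).
  apply Rmult_le_compat_r; lra.
Qed.

(* Forward direction: head terms by the asymptotics, tail by the geometric
   domination. *)
Lemma series_asymp_fwd a (W : R -> R) (Wn : nat -> R -> R) (L : R -> R) :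
  0 < a < 1 ->
  (exists tp, forall t, tp <= t -> 0 < W t) ->
  (forall n t, 0 <= Wn n t) ->
  (forall n e, 0 < e -> exists t1, forall t, t1 <= t ->
      (INR n + 1 - e) * W t <= Wn n t <= (INR n + 1 + e) * W t) ->
  (exists V, 0 <= V /\ exists q, 0 <= q /\ a * q < 1 /\
     exists tk, forall n t, tk <= t -> Wn n t <= V * q ^ n * W t) ->
  (forall t, Un_cv (fun N => sum_f_R0 (fun n => a ^ n * Wn n t) N) (L t)) ->
  forall e, 0 < e -> exists t0, forall t, t0 <= t -> Rabs (L t - W t / (1 - a) ^ 2) <= e * W t.
Proof.
  intros Ha [tp Hp] Hnn Hlim [V [HV [q [Hq [Haq [tk Hk]]]]]] HL e He.
  (* Error budget e/3 each: the series tail, the head terms, and the truncation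
     of sum (n+1) a^n. *)
  set (eta := e / 3). assert (Heta : 0 < eta) by (unfold eta; lra).
  set (rho := a * q). assert (Hrho : 0 <= rho < 1) by (unfold rho; split; [nra|lra]).
  destruct (weighted_geom_cv a Ha eta Heta) as [N1 HN1].
  destruct (geom_small rho V eta Hrho HV Heta) as [N2 HN2].
  set (N := max N1 N2).
  set (eta' := eta * (1 - a)). assert (Heta' : 0 < eta') by (unfold eta'; nra).
  destruct (eventually_uniform_finite (fun n t => (INR n + 1 - eta') * W t <= Wn n t <= (INR n + 1 + eta') * W t)
     (fun n => Hlim n eta' Heta') N) as [t2 Ht2].
  exists (Rmax tp (Rmax tk t2)). intros t Ht.
  pose proof (Rmax_l tp (Rmax tk t2)). pose proof (Rmax_r tp (Rmax tk t2)).
  pose proof (Rmax_l tk t2). pose proof (Rmax_r tk t2).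
  assert (Hw : 0 < W t) by (apply Hp; lra).
  set (c := fun n => a ^ n * Wn n t).
  assert (Htail : 0 <= L t - sum_f_R0 c N <= eta * W t).
  { apply (series_tail_dominated a q V (W t) (fun n => Wn n t)); auto; try lra.
    - intro n. split; auto. apply Hk. lra.
    - apply HN2, Nat.le_max_r. }
  assert (Hhead : Rabs (sum_f_R0 c N - weighted_geom a N * W t) <= eta * W t).
  { apply partial_sum_near_weighted; auto; try lra.
    intros n Hn. apply Ht2; auto; lra. }
  assert (Hweighted : 0 <= 1 / (1 - a) ^ 2 - weighted_geom a N <= eta) by (apply HN1; apply Nat.le_max_l).
  assert (E : W t / (1 - a) ^ 2 = 1 / (1 - a) ^ 2 * W t) by (field; lra).
  rewrite E. apply Rabs_le_inv in Hhead. apply Rabs_le.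
  assert (Hweighted_w : 0 <= (1 / (1 - a) ^ 2 - weighted_geom a N) * W t <= eta * W t).
  { split. apply Rmult_le_pos; lra. apply Rmult_le_compat_r; lra. }
  assert (E2 : (1 / (1 - a) ^ 2 - weighted_geom a N) * W t = 1 / (1 - a) ^ 2 * W t - weighted_geom a N * W t) by ring.
  assert (E3 : e * W t = 3 * (eta * W t)) by (unfold eta; field).
  rewrite E3. lra.
Qed.

Lemma partial_sum_excess a w (wn : nat -> R) eta N : 0 < a < 1 -> (1 <= N)%nat ->
  (forall n, (n <= N)%nat -> (INR n + 1 - eta) * w <= wn n) ->
  a * wn 1%nat - a * ((2 - eta) * w) <=
  sum_f_R0 (fun n => a ^ n * wn n) N - (weighted_geom a N - eta * sum_f_R0 (fun n => a ^ n) N) * w.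
Proof.
  intros Ha HN Hn.
  set (d := fun n => a ^ n * wn n - a ^ n * ((INR n + 1 - eta) * w)).
  assert (Hd : forall n, (n <= N)%nat -> 0 <= d n).
  { intros n HnN. unfold d. specialize (Hn n HnN). pose proof (pow_le a n ltac:(lra)).
    assert (a ^ n * ((INR n + 1 - eta) * w) <= a ^ n * wn n) by (apply Rmult_le_compat_l; auto).
    lra. }
  assert (Hsum : sum_f_R0 d N = sum_f_R0 (fun n => a ^ n * wn n) N -
      (weighted_geom a N - eta * sum_f_R0 (fun n => a ^ n) N) * w).
  { unfold d, weighted_geom. clear -a. induction N.
    - simpl. ring.
    - rewrite !tech5, IHN. ring. }
  rewrite <- Hsum.
  replace (a * wn 1%nat - a * ((2 - eta) * w)) with (d 1%nat) by (unfold d; simpl; ring).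
  destruct N as [|N]; [lia|].
  rewrite sum_shift. pose proof (Hd 0%nat ltac:(lia)).
  assert (d 1%nat <= sum_f_R0 (fun k => d (S k)) N); [|lra].
  destruct N as [|N]; [simpl; lra|]. rewrite sum_shift.
  assert (0 <= sum_f_R0 (fun k => d (S (S k))) N); [|lra].
  apply Rle_trans with (sum_f_R0 (fun _ => 0) N).
  - rewrite sum_cte. lra.
  - apply sum_Rle. intros k Hk. apply Hd. lia.
Qed.

Lemma excess_term_bound a w wn1 S L P G eta : 0 < a < 1 -> 0 < w -> 0 <= eta ->
  a * wn1 - a * ((2 - eta) * w) <= S - (P - eta * G) * w ->
  S <= L -> L <= (1 / (1 - a) ^ 2 + eta) * w ->
  1 / (1 - a) ^ 2 - P <= eta -> G <= 1 / (1 - a) ->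
  a * wn1 <= a * (2 * w) + (2 * eta + eta / (1 - a)) * w.
Proof.
  intros Ha Hw Heta Hexcess HSL HL HP HG.
  assert (eta * G * w <= eta / (1 - a) * w).
  { apply Rmult_le_compat_r; [lra|]. unfold Rdiv. rewrite <- (Rmult_1_l (/ (1 - a))).
    apply Rmult_le_compat_l; lra. }
  assert ((1 / (1 - a) ^ 2 - P) * w <= eta * w) by (apply Rmult_le_compat_r; lra).
  assert (a * ((2 - eta) * w) <= a * (2 * w)) by (apply Rmult_le_compat_l; nra).
  assert (E1 : (1 / (1 - a) ^ 2 + eta) * w = (1 / (1 - a) ^ 2 - P) * w + P * w + eta * w) by ring.
  assert (E2 : (P - eta * G) * w = P * w - eta * G * w) by ring.
  assert (E3 : (2 * eta + eta / (1 - a)) * w = 2 * (eta * w) + eta / (1 - a) * w) by ring.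
  nra.
Qed.

Lemma series_asymp_bwd a (W : R -> R) (Wn : nat -> R -> R) (L : R -> R) :
  0 < a < 1 ->
  (exists tp, forall t, tp <= t -> 0 < W t) ->
  (forall n t, 0 <= Wn n t) ->
  (forall n e, 0 < e -> exists t1, forall t, t1 <= t -> (INR n + 1 - e) * W t <= Wn n t) ->
  (forall t, Un_cv (fun N => sum_f_R0 (fun n => a ^ n * Wn n t) N) (L t)) ->
  (forall e, 0 < e -> exists t0, forall t, t0 <= t -> L t <= (1 / (1 - a) ^ 2 + e) * W t) ->
  forall e, 0 < e -> exists t0, forall t, t0 <= t -> Wn 1%nat t <= (2 + e) * W t.
Proof.
  intros Ha [tp Hp] Hnn HLB HL Has e He.
  set (eta := e * a * (1 - a) / 3).
  assert (Heta : 0 < eta) by (unfold eta; apply Rdiv_lt_0_compat; [apply Rmult_lt_0_compat; [nra|]|]; lra).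
  destruct (weighted_geom_cv a Ha eta Heta) as [N1 HN1].
  set (N := max 1 N1).
  destruct (eventually_uniform_finite (fun n t => (INR n + 1 - eta) * W t <= Wn n t) (fun n => HLB n eta Heta) N) as [t2 Ht2].
  destruct (Has eta Heta) as [t3 Ht3].
  exists (Rmax tp (Rmax t2 t3)). intros t Ht.
  pose proof (Rmax_l tp (Rmax t2 t3)). pose proof (Rmax_r tp (Rmax t2 t3)).
  pose proof (Rmax_l t2 t3). pose proof (Rmax_r t2 t3).
  assert (Hw : 0 < W t) by (apply Hp; lra).
  assert (Hexcess := partial_sum_excess a (W t) (fun n => Wn n t) eta N Ha (Nat.le_max_l _ _)
                       (fun n Hn => Ht2 n t Hn ltac:(lra))).
  simpl in Hexcess.
  assert (Hpartial : sum_f_R0 (fun n => a ^ n * Wn n t) N <= L t).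
  { apply sum_incr; auto. intro n. apply Rmult_le_pos; auto. apply pow_le; lra. }
  assert (Hexcess_bound := excess_term_bound a (W t) (Wn 1%nat t) _ (L t) (weighted_geom a N)
                 (sum_f_R0 (fun n => a ^ n) N) eta Ha Hw ltac:(lra) Hexcess Hpartial
                 (Ht3 t ltac:(lra)) (proj2 (HN1 N (Nat.le_max_r _ _)))
                 (geom_sum_le a N ltac:(lra))).
  assert (Heta_small : (2 * eta + eta / (1 - a)) <= a * e).
  { unfold eta. replace (2 * (e * a * (1 - a) / 3) + e * a * (1 - a) / 3 / (1 - a)) with
      (a * e * (2 * (1 - a) / 3 + 1 / 3)) by (field; lra).
    assert (a * e * (2 * (1 - a) / 3 + 1 / 3) = a * e - (a * e) * (2 * a / 3)) by field.
    assert (0 <= (a * e) * (2 * a / 3)) by (apply Rmult_le_pos; nra). lra. }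
  assert (Heta_small_w : (2 * eta + eta / (1 - a)) * W t <= a * e * W t) by (apply Rmult_le_compat_r; lra).
  assert (Hscaled : a * Wn 1%nat t <= a * ((2 + e) * W t)).
  { replace (a * ((2 + e) * W t)) with (a * (2 * W t) + a * e * W t) by ring. lra. }
  apply Rmult_le_reg_l with a; lra.
Qed.

Lemma Afun_series_cv F a s : subdistr F 1 -> 0 < a < 1 ->
  Un_cv (fun N => sum_f_R0 (fun n => a ^ n * (1 - conv_pow F (S n) s)) N)
        (lim (fun N => sum_f_R0 (fun n => a ^ n * (1 - conv_pow F (S n) s)) N)).
Proof.
  intros HF Ha.
  assert (Ht : forall n, 0 <= a ^ n * (1 - conv_pow F (S n) s) <= a ^ n).
  { intro n. pose proof (subdistr_le_mass _ _ (conv_pow_subdistr F (S n) HF) s).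
    pose proof (subdistr_nonneg _ _ (conv_pow_subdistr F (S n) HF) s). pose proof (pow_le a n ltac:(lra)).
    split; nra. }
  destruct (growing_cv (fun N => sum_f_R0 (fun n => a ^ n * (1 - conv_pow F (S n) s)) N)) as [l Hl].
  - intro n. rewrite tech5. pose proof (Ht (S n)). lra.
  - exists (1 / (1 - a)). intros x [n Hn]. subst x.
    eapply Rle_trans; [|apply (geom_sum_le a n); lra].
    apply sum_Rle. intros; apply Ht.
  - rewrite (lim_eq _ l Hl). exact Hl.
Qed.

Lemma Adiff_series_cv F a T t : subdistr F 1 -> 0 < a < 1 ->
  Un_cv (fun N => sum_f_R0 (fun n => a ^ n * window 1 T (conv_pow F (S n)) t) N) (Adiff F a T t / (1 - a)).
Proof.
  intros HF Ha. destruct T as [u|]; unfold Adiff, Afun.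
  - replace (((1 - a) * lim (fun N => sum_f_R0 (fun n => a ^ n * (1 - conv_pow F (S n) t)) N) -
      (1 - a) * lim (fun N => sum_f_R0 (fun n => a ^ n * (1 - conv_pow F (S n) (t + u))) N)) / (1 - a))
      with (lim (fun N => sum_f_R0 (fun n => a ^ n * (1 - conv_pow F (S n) t)) N) -
            lim (fun N => sum_f_R0 (fun n => a ^ n * (1 - conv_pow F (S n) (t + u))) N)) by (field; lra).
    apply (Un_cv_ext (fun N => sum_f_R0 (fun n => a ^ n * (1 - conv_pow F (S n) t)) N -
                               sum_f_R0 (fun n => a ^ n * (1 - conv_pow F (S n) (t + u))) N)).
    + intro N. rewrite <- minus_sum. apply sum_eq. intros. unfold window. ring.
    + apply CV_minus; apply Afun_series_cv; auto.
  - replace ((1 - a) * lim (fun N => sum_f_R0 (fun n => a ^ n * (1 - conv_pow F (S n) t)) N) / (1 - a))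
      with (lim (fun N => sum_f_R0 (fun n => a ^ n * (1 - conv_pow F (S n) t)) N)) by (field; lra).
    exact (Afun_series_cv F a t HF Ha).
Qed.

Lemma in_S_window_upper F T : in_S F T -> subexp_upper F T.
Proof.
  intros [_ [_ [HL Heq]]] e He.
  destruct (in_L_pos F T HL) as [tp Htp].
  destruct (Heq e He) as [x0 Hx0]. exists (Rmax x0 tp). intros x Hx.
  pose proof (Rmax_l x0 tp). pose proof (Rmax_r x0 tp).
  specialize (Hx0 x ltac:(lra)). specialize (Htp x ltac:(lra)).
  rewrite !mass_int_window in Hx0. apply Rabs_def2 in Hx0.
  set (m := window 1 T (conv F F) x) in *. set (w := window 1 T F x) in *.
  assert (m / (2 * w) * (2 * w) = m) by (field; lra). nra.
Qed.

Lemma conv_pow_window_asymp F T : subdistr F 1 -> Tval_ok T -> in_S F T ->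
  forall n e, 0 < e -> exists t1, forall t, t1 <= t ->
    (INR n + 1 - e) * window 1 T F t <= window 1 T (conv_pow F (S n)) t <=
    (INR n + 1 + e) * window 1 T F t.
Proof.
  intros HF HT HS n e He. pose proof HS as [_ [_ [HL _]]].
  destruct (conv_pow_window_lower F T HF HT HL n e He) as [t1 H1].
  destruct (conv_pow_window_upper F T HF HT HL (in_S_window_upper F T HS) n e He) as [t2 H2].
  exists (Rmax t1 t2). intros t Ht. pose proof (Rmax_l t1 t2). pose proof (Rmax_r t1 t2).
  rewrite <- S_INR. split; [apply H1 | apply H2]; lra.
Qed.

Lemma kesten_geometric F T a : subdistr F 1 -> Tval_ok T -> in_S F T -> 0 < a < 1 ->
  exists V, 0 <= V /\ exists q, 0 <= q /\ a * q < 1 /\ exists tk, forall n t, tk <= t ->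
    window 1 T (conv_pow F (S n)) t <= V * q ^ n * window 1 T F t.
Proof.
  intros HF HT HS Ha. pose proof HS as [_ [_ [HL _]]].
  set (e := Rmin 1 ((1 - a) / (10 * a))).
  assert (He : 0 < e <= 1 /\ a * e <= (1 - a) / 10).
  { unfold e. split; [split; [apply Rmin_glb_lt; [lra|apply Rdiv_lt_0_compat; lra]|apply Rmin_l]|].
    pose proof (Rmin_r 1 ((1 - a) / (10 * a))).
    replace ((1 - a) / 10) with (a * ((1 - a) / (10 * a))) by (field; lra).
    apply Rmult_le_compat_l; lra. }
  destruct He as [He Hae].
  destruct (kesten_bound F T HF HT HL (in_S_window_upper F T HS) e He) as [V [HV [xk Hk]]].
  exists V. split; auto. exists ((1 + 4 * e) * (1 + e)). split; [nra|]. split.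
  - assert (0 <= a * e * (1 - e)) by (apply Rmult_le_pos; [apply Rmult_le_pos|]; lra).
    assert (a * ((1 + 4 * e) * (1 + e)) = a + 9 * (a * e) - 4 * (a * e * (1 - e))) by ring. lra.
  - exists xk. intros n t Ht. apply Hk; auto.
Qed.

Lemma Adiff_equiv_of_series F a T : 0 < a < 1 ->
  (exists tp, forall t, tp <= t -> 0 < window 1 T F t) ->
  (forall e, 0 < e -> exists t0, forall t, t0 <= t ->
     Rabs (Adiff F a T t / (1 - a) - window 1 T F t / (1 - a) ^ 2) <= e * window 1 T F t) ->
  equiv_inf (Adiff F a T) (fun t => mass_int F T t / (1 - a)).
Proof.
  intros Ha [tp Htp] Hser e He.
  destruct (Hser (e / 2) ltac:(lra)) as [t0 Ht0].
  exists (Rmax t0 tp). intros x Hx. pose proof (Rmax_l t0 tp). pose proof (Rmax_r t0 tp).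
  specialize (Ht0 x ltac:(lra)). specialize (Htp x ltac:(lra)).
  rewrite mass_int_window. set (w := window 1 T F x) in *. set (L := Adiff F a T x / (1 - a)) in *.
  assert (E : Adiff F a T x / (w / (1 - a)) - 1 = (1 - a) ^ 2 * (L - w / (1 - a) ^ 2) / w).
  { unfold L. field. split; lra. }
  rewrite E. unfold Rdiv at 1. rewrite Rabs_mult, Rabs_mult.
  rewrite (Rabs_right ((1 - a) ^ 2)) by (apply Rle_ge, pow_le; lra).
  rewrite (Rabs_right (/ w)) by (apply Rle_ge; left; apply Rinv_0_lt_compat; auto).
  assert (Hq : (1 - a) ^ 2 < 1) by (simpl; nra).
  assert (Hq0 : 0 < (1 - a) ^ 2) by (simpl; nra).
  assert (Rabs (L - w / (1 - a) ^ 2) * / w <= e / 2).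
  { apply (Rmult_le_reg_r w); auto. rewrite Rmult_assoc, Rinv_l, Rmult_1_r by lra. lra. }
  assert (0 <= Rabs (L - w / (1 - a) ^ 2) * / w).
  { apply Rmult_le_pos. apply Rabs_pos. left; apply Rinv_0_lt_compat; auto. }
  rewrite Rmult_assoc. nra.
Qed.

Lemma series_upper_of_Adiff_equiv F a T : 0 < a < 1 ->
  (exists tp, forall t, tp <= t -> 0 < window 1 T F t) ->
  equiv_inf (Adiff F a T) (fun t => mass_int F T t / (1 - a)) ->
  forall e, 0 < e -> exists t0, forall t, t0 <= t ->
    Adiff F a T t / (1 - a) <= (1 / (1 - a) ^ 2 + e) * window 1 T F t.
Proof.
  intros Ha [tp Htp] Heq e He. assert (Hq0 : 0 < (1 - a) ^ 2) by (simpl; nra).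
  destruct (Heq (e * (1 - a) ^ 2) ltac:(nra)) as [t0 Ht0].
  exists (Rmax t0 tp). intros t Ht. pose proof (Rmax_l t0 tp). pose proof (Rmax_r t0 tp).
  specialize (Ht0 t ltac:(lra)). specialize (Htp t ltac:(lra)).
  rewrite mass_int_window in Ht0. set (w := window 1 T F t) in *.
  set (L := Adiff F a T t / (1 - a)). apply Rabs_def2 in Ht0.
  assert (E : Adiff F a T t / (w / (1 - a)) = (1 - a) ^ 2 * L / w) by (unfold L; field; split; lra).
  rewrite E in Ht0.
  assert (E2 : (1 - a) ^ 2 * L / w * w = (1 - a) ^ 2 * L) by (field; lra).
  assert ((1 - a) ^ 2 * L < (1 + e * (1 - a) ^ 2) * w) by nra.
  assert (E3 : (1 / (1 - a) ^ 2 + e) * w * (1 - a) ^ 2 = (1 + e * (1 - a) ^ 2) * w) by (field; lra).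
  apply (Rmult_le_reg_r ((1 - a) ^ 2)); auto. nra.
Qed.

Lemma unbounded_support_of_in_L F T : subdistr F 1 -> Tval_ok T -> in_L F T ->
  unbounded_support F.
Proof.
  intros HF HT HL x. destruct (in_L_pos F T HL) as [tp Htp].
  destruct (Rlt_dec (F x) 1) as [h|h]; auto. exfalso.
  set (z := Rmax x tp). specialize (Htp z (Rmax_r _ _)). unfold window in Htp.
  assert (Fz : F z = 1).
  { pose proof (subdistr_le_mass F 1 HF z). pose proof (subdistr_mono F 1 HF x z (Rmax_l _ _)). lra. }
  destruct T as [u|]; simpl in HT.
  - pose proof (subdistr_le_mass F 1 HF (z + u)). pose proof (subdistr_mono F 1 HF z (z + u) ltac:(lra)). lra.
  - lra.
Qed.

(* For long-tailed F, F^{*2}(x+Delta) <=~ 2 F(x+Delta) suffices for S_Delta, the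
   reverse inequality being automatic. *)
Lemma in_S_of_conv_pow2_upper F T : is_distr F -> Tval_ok T -> in_L F T ->
  (forall e, 0 < e -> exists t0, forall t, t0 <= t ->
     window 1 T (conv_pow F 2) t <= (2 + e) * window 1 T F t) ->
  in_S F T.
Proof.
  intros HF0 HT HL HU. pose proof (distr_subdistr F HF0) as HF.
  split; [exact HF0|]. split; [apply (unbounded_support_of_in_L F T); auto|]. split; [exact HL|].
  intros e He. destruct (in_L_pos F T HL) as [tp Htp].
  destruct (HU e He) as [t1 Ht1].
  destruct (conv_pow_window_lower F T HF HT HL 1%nat e He) as [t2 Ht2].
  exists (Rmax tp (Rmax t1 t2)). intros t Ht.
  pose proof (Rmax_l tp (Rmax t1 t2)). pose proof (Rmax_r tp (Rmax t1 t2)).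
  pose proof (Rmax_l t1 t2). pose proof (Rmax_r t1 t2).
  specialize (Ht1 t ltac:(lra)). specialize (Ht2 t ltac:(lra)). specialize (Htp t ltac:(lra)).
  rewrite !mass_int_window, (window_conv_pow_2 F T t HF).
  set (w := window 1 T F t) in *. simpl INR in Ht2.
  apply Rabs_def1.
  - apply (Rmult_lt_reg_r (2 * w)); [lra|]. unfold Rdiv. rewrite Rmult_minus_distr_r, Rmult_assoc, Rinv_l by lra. nra.
  - apply (Rmult_lt_reg_r (2 * w)); [lra|]. unfold Rdiv. rewrite Rmult_minus_distr_r, Rmult_assoc, Rinv_l by lra. nra.
Qed.

Theorem theorem8 (F : R -> R) (a : R) (T : option R) :
  is_distr F -> 0 < a < 1 -> Tval_ok T -> in_L F T ->
  (in_S F T <->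
   equiv_inf (Adiff F a T) (fun t => mass_int F T t / (1 - a))).
Proof.
  intros HF0 Ha HT HL. pose proof (distr_subdistr F HF0) as HF.
  pose proof (in_L_pos F T HL) as Hpos.
  assert (Hnn : forall n t, 0 <= window 1 T (conv_pow F (S n)) t).
  { intros; apply (window_nonneg _ 1); auto; apply conv_pow_subdistr; auto. }
  pose proof (fun t => Adiff_series_cv F a T t HF Ha) as Hser.
  split.
  - intro HS. apply Adiff_equiv_of_series; auto.
    apply (series_asymp_fwd a (window 1 T F) (fun n t => window 1 T (conv_pow F (S n)) t));
      auto using conv_pow_window_asymp, kesten_geometric.
  - intro Heq. apply in_S_of_conv_pow2_upper; auto.
    apply (series_asymp_bwd a (window 1 T F) (fun n t => window 1 T (conv_pow F (S n)) t)
             (fun t => Adiff F a T t / (1 - a))); auto.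
    + intros n e He. destruct (conv_pow_window_lower F T HF HT HL n e He) as [t1 H1].
      exists t1. intros t Ht. rewrite <- S_INR. auto.
    + apply series_upper_of_Adiff_equiv; auto.
Qed.
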